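(* Let $\Lambda\subset\mathbb Z^{2n+1}$ be a subgroup of rank at most $n-1$ with basis matrix $M(\Lambda)=(A\,|\,B\,|\,c)$, and let $V(\Lambda)$ be the associated variety of gluing equation type. Suppose $d=(d_1,\ldots,d_n)$ is a degeneration vector that is totally positive, i.e. $d_i>0$ for all $i$. If $A$ has rank $n-1$, then $d$ is genuine.
   Context: Let $\mathbb C^{*\bullet}=\mathbb C\setminus\{0,1\}$. For a subgroup $\Lambda\subset\mathbb Z^{2n+1}$, $V(\Lambda)\subset(\mathbb C^{*\bullet})^n$ is the set of points $(z_1,\ldots,z_n)$ with $z_1^{a_1}\cdots z_n^{a_n}(1-z_1)^{b_1}\cdots(1-z_n)^{b_n}=(-1)^c$ for all $(a_1,\ldots,a_n,b_1,\ldots,b_n,c)\in\Lambda$; when $\mathrm{rank}\,\Lambda\le n-1$ it is called a variety of gluing equation type. $M(\Lambda)$ is a matrix whose rows form a $\mathbb Z$-basis of $\Lambda$, written as $(A|B|c)$ with $A,B$ of size $r\times n$ and $c$ a column. Let $\overline V$ be the closure of $V(\Lambda)$ in $(\mathbb C\setminus\{1\})^n$; points of $\overline V\setminus V$ are ideal points. A degeneration vector is a nonzero $d\in\ker(A)\cap(\mathbb Z_{\ge0})^n$. It is genuine if there is an ideal point $p$ and a holomorphic map $f$ from the open unit disc, $f:(\mathbb D,0)\to(\overline V,p)$ with $f(\mathbb D\setminus\{0\})\subset V(\Lambda)$, whose coordinates have the form $z_i=t^{d_i}u_i(t)$ with $u_i$ holomorphic, $u_i(0)\ne0$, and $u_i(0)\neq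 1$ whenever $d_i=0$. *)

From Stdlib Require Import Reals ZArith.
Open Scope R_scope.

Definition C : Type := (R * R)%type.
Definition Cre (z : C) : R := fst z.
Definition Cim (z : C) : R := snd z.
Definition C0 : C := (0, 0).
Definition C1 : C := (1, 0).
Definition Cadd (z w : C) : C := (fst z + fst w, snd z + snd w).
Definition Copp (z : C) : C := (- fst z, - snd z).
Definition Csub (z w : C) : C := Cadd z (Copp w).
Definition Cmul (z w : C) : C :=
  (fst z * fst w - snd z * snd w, fst z * snd w + snd z * fst w).
Definition Cnorm (z : C) : R := sqrt (fst z * fst z + snd z * snd z).
Definition Cinv (z : C) : C :=
  let r := fst z * fst z + snd z * snd z in (fst z / r, - snd z / r).
Fixpoint Cpow (z : C) (k : nat) : C :=
  match k with O => C1 | S k' => Cmul z (Cpow z k') end.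
Definition Cpowz (z : C) (a : Z) : C :=
  match a with
  | Z0 => C1
  | Zpos p => Cpow z (Pos.to_nat p)
  | Zneg p => Cinv (Cpow z (Pos.to_nat p))
  end.
Definition sgnZ (c : Z) : C := Cpowz (Copp C1) c.

Fixpoint Cprod (n : nat) (F : nat -> C) : C :=
  match n with O => C1 | S n' => Cmul (Cprod n' F) (F n') end.

Definition in_disc (t : C) : Prop := Cnorm t < 1.

Definition holomorphic_on_disc (u : C -> C) : Prop :=
  forall t, in_disc t ->
    exists l : C, forall eps, 0 < eps -> exists delta, 0 < delta /\
      forall h : C, 0 < Cnorm h < delta ->
        Cnorm (Csub (Cmul (Csub (u (Cadd t h)) (u t)) (Cinv h)) l) < eps.

(** A point of C^n is a function [nat -> C]; only coordinates [i < n] matter.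
    An integer vector of Z^(2n+1) is a function [nat -> Z]; its coordinates are
    (a_1..a_n, b_1..b_n, c) = (x 0 .. x (n-1), x n .. x (2n-1), x (2n)).
    The matrix M(Λ) has [r] rows; [M k j] is the entry in row k, column j. *)

Fixpoint Zsum (r : nat) (F : nat -> Z) : Z :=
  match r with O => 0%Z | S r' => (Zsum r' F + F r')%Z end.
Fixpoint Rsum (r : nat) (F : nat -> R) : R :=
  match r with O => 0 | S r' => Rsum r' F + F r' end.

Definition in_lattice (n r : nat) (M : nat -> nat -> Z) (x : nat -> Z) : Prop :=
  exists k : nat -> Z, forall j, (j < 2 * n + 1)%nat ->
    x j = Zsum r (fun i => (k i * M i j)%Z).

(** rows of M are Z-linearly independent (so they form a Z-basis of Λ,
    and rank Λ = r) *)
Definition rows_Z_indep (r m : nat) (M : nat -> nat -> Z) : Prop :=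
  forall k : nat -> Z,
    (forall j, (j < m)%nat -> Zsum r (fun i => (k i * M i j)%Z) = 0%Z) ->
    forall i, (i < r)%nat -> k i = 0%Z.

Definition gluing_monomial (n : nat) (x : nat -> Z) (z : nat -> C) : C :=
  Cprod n (fun i => Cmul (Cpowz (z i) (x i)) (Cpowz (Csub C1 (z i)) (x (n + i)%nat))).

Definition in_Cstarbullet_n (n : nat) (z : nat -> C) : Prop :=
  forall i, (i < n)%nat -> z i <> C0 /\ z i <> C1.

Definition in_V (n r : nat) (M : nat -> nat -> Z) (z : nat -> C) : Prop :=
  in_Cstarbullet_n n z /\
  forall x, in_lattice n r M x -> gluing_monomial n x z = sgnZ (x (2 * n)%nat).

Definition in_Vbar (n r : nat) (M : nat -> nat -> Z) (p : nat -> C) : Prop :=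
  (forall i, (i < n)%nat -> p i <> C1) /\
  forall eps, 0 < eps -> exists z, in_V n r M z /\
    forall i, (i < n)%nat -> Cnorm (Csub (z i) (p i)) < eps.

Definition ideal_point (n r : nat) (M : nat -> nat -> Z) (p : nat -> C) : Prop :=
  in_Vbar n r M p /\ ~ in_V n r M p.

(** the block A of M = (A|B|c): A i j = M i j for j < n *)
Definition blockA (M : nat -> nat -> Z) : nat -> nat -> Z := M.

Definition rows_R_indep (m : nat) (A : nat -> nat -> Z) (k : nat) (s : nat -> nat) : Prop :=
  forall c : nat -> R,
    (forall j, (j < m)%nat -> Rsum k (fun i => c i * IZR (A (s i) j)) = 0) ->
    forall i, (i < k)%nat -> c i = 0.

Definition has_indep_rows (r m : nat) (A : nat -> nat -> Z) (k : nat) : Prop :=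
  exists s : nat -> nat, (forall i, (i < k)%nat -> (s i < r)%nat) /\ rows_R_indep m A k s.

(** rank of the (r x m) integer matrix A (over Q, equivalently over R) is q:
    maximal number of linearly independent rows *)
Definition mat_rank (r m : nat) (A : nat -> nat -> Z) (q : nat) : Prop :=
  has_indep_rows r m A q /\ forall k, has_indep_rows r m A k -> (k <= q)%nat.

Definition degeneration_vector (n r : nat) (M : nat -> nat -> Z) (d : nat -> nat) : Prop :=
  (exists i, (i < n)%nat /\ d i <> 0%nat) /\
  forall k, (k < r)%nat -> Zsum n (fun j => (blockA M k j * Z.of_nat (d j))%Z) = 0%Z.

Definition genuine (n r : nat) (M : nat -> nat -> Z) (d : nat -> nat) : Prop :=
  exists (p : nat -> C) (u : nat -> C -> C),
    ideal_point n r M p /\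
    (forall i, (i < n)%nat ->
       holomorphic_on_disc (u i) /\ u i C0 <> C0 /\ (d i = 0%nat -> u i C0 <> C1)) /\
    let f := fun (t : C) (i : nat) => Cmul (Cpow t (d i)) (u i t) in
    (forall i, (i < n)%nat -> f C0 i = p i) /\
    (forall t, in_disc t -> in_Vbar n r M (f t)) /\
    (forall t, in_disc t -> t <> C0 -> in_V n r M (f t)).

From Stdlib Require Import Reals ZArith Lra Lia Field Ring Classical FunctionalExtensionality IndefiniteDescription.
From mathcomp Require all_boot all_algebra Rstruct.

(* Since [rank A = n - 1 >= r], the rows of [A] are independent and [A] has a real right inverse [Psi].
   Look for the curve as [z_i = t^(d_i) u0_i (1 + w_i(t))] with constants [|u0_i| = 1] chosen so that
   [u0^(A_k) = (-1)^(c_k)]; because [A d = 0] the powers of [t] cancel from every gluing monomial.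
   With [w = Psi x] the gluing equations become a fixed point problem [x = F(x, t)] whose right-hand
   side has no linear term in [x] at the origin (since [A Psi = 1]), so a contraction argument solves it
   for small [t], and a quadratic remainder estimate shows that the solution is holomorphic in [t].
   After rescaling [t] to the unit disc, [u_i = u0_i (1 + w_i)] is holomorphic and nonzero, [z(t)] lies
   in [V] for [t <> 0], and [z(0) = 0] is an ideal point because all [d_i > 0]. *)

Open Scope R_scope.

Lemma Cpair_eq (a b c d : R) : a = c -> b = d -> (a, b) = (c, d).
Proof. intros -> ->; reflexivity. Qed.

Lemma Cring_theory : ring_theory C0 C1 Cadd Cmul Csub Copp (@eq C).
Proof.
  constructor; intros; repeat match goal with z : C |- _ => destruct z end;
  unfold Csub, Cadd, Cmul, Copp, C0, C1; simpl; apply Cpair_eq; ring.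
Qed.
Add Ring Cring : Cring_theory.

Definition Cdiv (a b : C) : C := Cmul a (Cinv b).

Lemma C1_neq_C0 : C1 <> C0.
Proof. unfold C1, C0; intro H; injection H; intros; lra. Qed.

Lemma Cnorm2_pos (z : C) : z <> C0 -> 0 < fst z * fst z + snd z * snd z.
Proof.
  destruct z as [x y]; simpl; intro H.
  destruct (Req_dec x 0); destruct (Req_dec y 0); subst.
  - exfalso; apply H; reflexivity.
  - assert (0 < y*y) by (apply Rsqr_pos_lt; auto). nra.
  - assert (0 < x*x) by (apply Rsqr_pos_lt; auto). nra.
  - assert (0 < y*y) by (apply Rsqr_pos_lt; auto). nra.
Qed.

Lemma Cinv_l (z : C) : z <> C0 -> Cmul (Cinv z) z = C1.
Proof.
  intro H; pose proof (Cnorm2_pos z H).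
  destruct z as [x y]; unfold Cinv, Cmul, C1; simpl in *; apply Cpair_eq; field; lra.
Qed.

Lemma Cfield_theory : field_theory C0 C1 Cadd Cmul Csub Copp Cdiv Cinv (@eq C).
Proof.
  constructor.
  - exact Cring_theory.
  - exact C1_neq_C0.
  - reflexivity.
  - exact Cinv_l.
Qed.
Add Field Cfield : Cfield_theory.

Definition RtoC (a : R) : C := (a, 0).

Lemma Cnorm_nonneg z : 0 <= Cnorm z.
Proof. unfold Cnorm; apply sqrt_pos. Qed.

Lemma Cnorm_mul z w : Cnorm (Cmul z w) = Cnorm z * Cnorm w.
Proof.
  destruct z as [x y]; destruct w as [u v]; unfold Cnorm, Cmul; simpl.
  rewrite <- sqrt_mult by nra. f_equal; ring.
Qed.

Lemma Cnorm_triangle z w : Cnorm (Cadd z w) <= Cnorm z + Cnorm w.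
Proof.
  destruct z as [x y]; destruct w as [u v]; unfold Cnorm, Cadd; simpl.
  set (P := x*x+y*y); set (Q := u*u+v*v).
  assert (HP : 0 <= P) by (unfold P; nra). assert (HQ : 0 <= Q) by (unfold Q; nra).
  assert (Hab : x*u+y*v <= sqrt P * sqrt Q).
  { rewrite <- sqrt_mult by auto.
    destruct (Rle_dec (x*u+y*v) 0) as [h|h].
    - pose proof (sqrt_pos (P*Q)); lra.
    - rewrite <- (sqrt_square (x*u+y*v)) at 1 by lra.
      apply sqrt_le_1_alt. unfold P, Q.
      assert (0 <= (x*v-y*u)*(x*v-y*u)) by apply Rle_0_sqr. nra. }
  rewrite <- (sqrt_square (sqrt P + sqrt Q)) by (pose proof (sqrt_pos P); pose proof (sqrt_pos Q); lra).
  apply sqrt_le_1_alt.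
  replace ((sqrt P + sqrt Q) * (sqrt P + sqrt Q)) with (sqrt P * sqrt P + sqrt Q * sqrt Q + 2 * (sqrt P * sqrt Q)) by ring.
  rewrite !sqrt_sqrt by auto.
  assert (E: (x+u)*(x+u)+(y+v)*(y+v) = P + Q + 2*(x*u+y*v)) by (unfold P,Q; ring). lra.
Qed.

Lemma Cnorm_opp z : Cnorm (Copp z) = Cnorm z.
Proof. destruct z; unfold Cnorm, Copp; simpl; f_equal; ring. Qed.

Lemma Cnorm_sub_sym z w : Cnorm (Csub z w) = Cnorm (Csub w z).
Proof. replace (Csub z w) with (Copp (Csub w z)) by ring. apply Cnorm_opp. Qed.

Lemma Cnorm_sub z w : Cnorm (Csub z w) <= Cnorm z + Cnorm w.
Proof. unfold Csub. rewrite <- (Cnorm_opp w). apply Cnorm_triangle. Qed.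

Lemma Cnorm_C0 : Cnorm C0 = 0.
Proof. unfold Cnorm, C0; simpl. replace (0*0+0*0) with 0 by ring. apply sqrt_0. Qed.

Lemma Cnorm_RtoC a : Cnorm (RtoC a) = Rabs a.
Proof. unfold Cnorm, RtoC; simpl. replace (a*a+0*0) with (a*a) by ring. apply sqrt_Rsqr_abs. Qed.

Lemma Cnorm_C1 : Cnorm C1 = 1.
Proof. change C1 with (RtoC 1). rewrite Cnorm_RtoC. apply Rabs_R1. Qed.

Lemma Cnorm_eq0 z : Cnorm z = 0 -> z = C0.
Proof.
  destruct z as [x y]; unfold Cnorm; simpl; intro H.
  apply sqrt_eq_0 in H; [|nra]. unfold C0; apply Cpair_eq; nra.
Qed.

Lemma Cnorm_pos z : z <> C0 -> 0 < Cnorm z.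
Proof. intro H; destruct (Cnorm_nonneg z) as [h|h]; auto. symmetry in h. apply Cnorm_eq0 in h. contradiction. Qed.

Lemma Cnorm_fst z : Rabs (fst z) <= Cnorm z.
Proof.
  destruct z as [x y]; unfold Cnorm; simpl. rewrite <- sqrt_Rsqr_abs. apply sqrt_le_1_alt. unfold Rsqr; nra.
Qed.
Lemma Cnorm_snd z : Rabs (snd z) <= Cnorm z.
Proof.
  destruct z as [x y]; unfold Cnorm; simpl. rewrite <- sqrt_Rsqr_abs. apply sqrt_le_1_alt. unfold Rsqr; nra.
Qed.

Lemma Cpow_add z a b : Cpow z (a + b) = Cmul (Cpow z a) (Cpow z b).
Proof. induction a; simpl. ring. rewrite IHa; ring. Qed.

Lemma Cpow_mul_base z w a : Cpow (Cmul z w) a = Cmul (Cpow z a) (Cpow w a).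
Proof. induction a; simpl. ring. rewrite IHa; ring. Qed.

Lemma Cnorm_pow z a : Cnorm (Cpow z a) = Cnorm z ^ a.
Proof. induction a; simpl. apply Cnorm_C1. rewrite Cnorm_mul, IHa; ring. Qed.

Lemma Cmul_neq0 z w : z <> C0 -> w <> C0 -> Cmul z w <> C0.
Proof.
  intros H1 H2 H. apply (f_equal Cnorm) in H. rewrite Cnorm_mul, Cnorm_C0 in H.
  pose proof (Cnorm_pos _ H1); pose proof (Cnorm_pos _ H2); nra.
Qed.

Lemma Cpow_neq0 z a : z <> C0 -> Cpow z a <> C0.
Proof. intro H; induction a; simpl. apply C1_neq_C0. apply Cmul_neq0; auto. Qed.

Lemma Cinv_neq0 z : z <> C0 -> Cinv z <> C0.
Proof. intros H H'. pose proof (Cinv_l z H). rewrite H' in H0. apply C1_neq_C0. rewrite <- H0. ring. Qed.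

Lemma Cnorm_inv z : z <> C0 -> Cnorm (Cinv z) = / Cnorm z.
Proof.
  intro H. pose proof (Cinv_l z H). apply (f_equal Cnorm) in H0. rewrite Cnorm_mul, Cnorm_C1 in H0.
  pose proof (Cnorm_pos _ H). field_simplify_eq; [|lra]. lra.
Qed.

Lemma Cpow_C0 d : (0 < d)%nat -> Cpow C0 d = C0.
Proof. destruct d; [lia|]. intros _; simpl. ring. Qed.

Lemma Cinv_unique z w : Cmul w z = C1 -> z <> C0 -> Cinv z = w.
Proof. intros H Hz. rewrite <- (Cinv_l z Hz) in H. field_simplify_eq in H; auto.
  transitivity (Cmul (Cmul w z) (Cinv z)). rewrite H. field. auto. field. auto. Qed.

Lemma Cpowz_split z a : Cpowz z a = Cmul (Cpow z (Z.to_nat a)) (Cinv (Cpow z (Z.to_nat (- a)))).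
Proof.
  assert (Hi : Cinv C1 = C1) by (apply Cinv_unique; [ring | apply C1_neq_C0]).
  destruct a; simpl.
  - rewrite Hi; ring.
  - rewrite Hi; ring.
  - ring.
Qed.

Lemma Cpowz_neq0 z a : z <> C0 -> Cpowz z a <> C0.
Proof. intro H. rewrite Cpowz_split. apply Cmul_neq0. apply Cpow_neq0; auto. apply Cinv_neq0, Cpow_neq0; auto. Qed.

Lemma Cpowz_succ z a : z <> C0 -> Cpowz z (a + 1) = Cmul (Cpowz z a) z.
Proof.
  intro H. rewrite !Cpowz_split.
  destruct (Z_le_gt_dec 0 a).
  - replace (Z.to_nat (a+1)) with (S (Z.to_nat a)) by lia.
    replace (Z.to_nat (-(a+1))) with 0%nat by lia. replace (Z.to_nat (-a)) with 0%nat by lia.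
    simpl; ring.
  - replace (Z.to_nat (a+1)) with 0%nat by lia. replace (Z.to_nat a) with 0%nat by lia.
    replace (Z.to_nat (-a)) with (S (Z.to_nat (-(a+1)))) by lia.
    simpl. pose proof (Cpow_neq0 z (Z.to_nat (-(a+1))) H). field. split; auto.
Qed.

Lemma Cpowz_pred z a : z <> C0 -> Cpowz z (a - 1) = Cmul (Cpowz z a) (Cinv z).
Proof.
  intro H. pose proof (Cpowz_succ z (a-1) H). replace (a - 1 + 1)%Z with a in H0 by lia.
  rewrite H0. field. auto.
Qed.

Lemma Cpowz_add z a b : z <> C0 -> Cpowz z (a + b) = Cmul (Cpowz z a) (Cpowz z b).
Proof.
  intro H. revert a. induction b using Z.peano_ind; intro a.
  - rewrite Z.add_0_r. change (Cpowz z 0) with C1. ring.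
  - rewrite <- Z.add_1_r, Z.add_assoc, !Cpowz_succ, IHb by auto. ring.
  - rewrite <- Z.sub_1_r, Z.add_sub_assoc, !Cpowz_pred, IHb by auto. ring.
Qed.

Lemma Cpowz_mul z a k : z <> C0 -> Cpowz z (a * k) = Cpowz (Cpowz z a) k.
Proof.
  intro H. pose proof (Cpowz_neq0 z a H) as Ha.
  induction k using Z.peano_ind.
  - rewrite Z.mul_0_r. reflexivity.
  - rewrite <- Z.add_1_r, Z.mul_add_distr_l, Z.mul_1_r, Cpowz_add, Cpowz_succ, IHk by auto. ring.
  - rewrite <- Z.sub_1_r, Z.mul_sub_distr_l, Z.mul_1_r, Cpowz_pred by auto.
    replace (a * k - a)%Z with (a * k + - a)%Z by ring. rewrite Cpowz_add, IHk by auto.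
    replace (Cpowz z (-a)) with (Cinv (Cpowz z a)). ring.
    apply Cinv_unique; auto. rewrite <- Cpowz_add by auto. replace (-a + a)%Z with 0%Z by ring. reflexivity.
Qed.

Lemma Cpowz_mulbase z w k : z <> C0 -> w <> C0 -> Cpowz (Cmul z w) k = Cmul (Cpowz z k) (Cpowz w k).
Proof.
  intros H1 H2. pose proof (Cmul_neq0 _ _ H1 H2) as H3.
  induction k using Z.peano_ind.
  - simpl; ring.
  - rewrite <- Z.add_1_r, !Cpowz_succ, IHk by auto. ring.
  - rewrite <- Z.sub_1_r, !Cpowz_pred, IHk by auto. field. auto.
Qed.

Definition cis (th : R) : C := (cos th, sin th).

Lemma cis_add a b : Cmul (cis a) (cis b) = cis (a + b).
Proof. unfold cis, Cmul; simpl. rewrite cos_plus, sin_plus. apply Cpair_eq; ring. Qed.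

Lemma cis_0 : cis 0 = C1.
Proof. unfold cis, C1. rewrite cos_0, sin_0. reflexivity. Qed.

Lemma Cnorm_cis a : Cnorm (cis a) = 1.
Proof. unfold Cnorm, cis; simpl. rewrite <- sqrt_1. f_equal. pose proof (sin2_cos2 a). unfold Rsqr in H. lra. Qed.

Lemma cis_neq0 a : cis a <> C0.
Proof. intro H. pose proof (Cnorm_cis a). rewrite H, Cnorm_C0 in H0. lra. Qed.

Lemma Cpow_cis a k : Cpow (cis a) k = cis (INR k * a).
Proof.
  induction k. simpl. rewrite Rmult_0_l, cis_0. reflexivity.
  change (Cpow (cis a) (S k)) with (Cmul (cis a) (Cpow (cis a) k)).
  rewrite IHk, cis_add, S_INR. f_equal. ring.
Qed.

Lemma Cinv_cis a : Cinv (cis a) = cis (- a).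
Proof. apply Cinv_unique. rewrite cis_add. replace (-a + a) with 0 by ring. apply cis_0. apply cis_neq0. Qed.

Lemma Cpowz_cis a c : Cpowz (cis a) c = cis (IZR c * a).
Proof.
  rewrite Cpowz_split, !Cpow_cis, Cinv_cis, cis_add. f_equal.
  destruct (Z_le_gt_dec 0 c).
  - replace (Z.to_nat (-c)) with 0%nat by lia. rewrite (INR_IZR_INZ (Z.to_nat c)), Z2Nat.id by lia. simpl (INR 0). ring.
  - replace (Z.to_nat c) with 0%nat by lia. rewrite (INR_IZR_INZ (Z.to_nat (-c))), Z2Nat.id by lia. rewrite opp_IZR; simpl (INR 0); ring.
Qed.

Lemma sgnZ_cis c : sgnZ c = cis (IZR c * PI).
Proof.
  unfold sgnZ. replace (Copp C1) with (cis PI). apply Cpowz_cis.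
  unfold cis, Copp, C1; simpl. rewrite cos_PI, sin_PI. apply Cpair_eq; ring.
Qed.

Fixpoint Csum (n : nat) (F : nat -> C) : C :=
  match n with O => C0 | S n' => Cadd (Csum n' F) (F n') end.
Fixpoint natsum (n : nat) (F : nat -> nat) : nat :=
  match n with O => 0%nat | S n' => (natsum n' F + F n')%nat end.

Lemma Cprod_ext n f g : (forall i, (i < n)%nat -> f i = g i) -> Cprod n f = Cprod n g.
Proof. induction n; intros H; simpl; auto. rewrite IHn, H; auto. Qed.
Lemma Csum_ext n f g : (forall i, (i < n)%nat -> f i = g i) -> Csum n f = Csum n g.
Proof. induction n; intros H; simpl; auto. rewrite IHn, H; auto. Qed.

Lemma Cprod_mul n f g : Cprod n (fun i => Cmul (f i) (g i)) = Cmul (Cprod n f) (Cprod n g).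
Proof. induction n; simpl. ring. rewrite IHn; ring. Qed.

Lemma Cprod_neq0 n f : (forall i, (i < n)%nat -> f i <> C0) -> Cprod n f <> C0.
Proof. induction n; intros H; simpl. apply C1_neq_C0. apply Cmul_neq0; auto. Qed.

Lemma Cprod_inv n f : (forall i, (i < n)%nat -> f i <> C0) -> Cprod n (fun i => Cinv (f i)) = Cinv (Cprod n f).
Proof.
  intro H; symmetry; apply Cinv_unique.
  - rewrite <- Cprod_mul. clear -H. induction n; simpl. ring. rewrite IHn by auto. rewrite Cinv_l by auto. ring.
  - apply Cprod_neq0; auto.
Qed.

Lemma Cprod_Cpowz n f k : (forall i, (i < n)%nat -> f i <> C0) -> Cprod n (fun i => Cpowz (f i) k) = Cpowz (Cprod n f) k.
Proof.
  induction n; intros H; simpl. induction k using Z.peano_ind; auto.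
  - rewrite <- Z.add_1_r, Cpowz_succ, <- IHk. ring. apply C1_neq_C0.
  - rewrite <- Z.sub_1_r, Cpowz_pred, <- IHk. rewrite (Cinv_unique C1 C1). ring. ring. apply C1_neq_C0. apply C1_neq_C0.
  - rewrite IHn by auto. rewrite Cpowz_mulbase; auto. apply Cprod_neq0; auto.
Qed.

Lemma Cprod_pow n t e : Cprod n (fun i => Cpow t (e i)) = Cpow t (natsum n e).
Proof. induction n; simpl; auto. rewrite IHn, Cpow_add. ring. Qed.

Lemma sgnZ_add a b : sgnZ (a + b) = Cmul (sgnZ a) (sgnZ b).
Proof. unfold sgnZ. apply Cpowz_add. intro H; injection H; lra. Qed.
Lemma sgnZ_mul k c : sgnZ (k * c) = Cpowz (sgnZ c) k.
Proof. unfold sgnZ. rewrite Z.mul_comm. apply Cpowz_mul. intro H; injection H; lra. Qed.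

Lemma Rsum_ext n f g : (forall i, (i < n)%nat -> f i = g i) -> Rsum n f = Rsum n g.
Proof. induction n; intro H; simpl; auto. rewrite IHn, H; auto. Qed.

Lemma Rsum_zero n : Rsum n (fun _ => 0) = 0.
Proof. induction n; simpl; auto. rewrite IHn; ring. Qed.

Lemma Rsum_delta n k f : (k < n)%nat -> Rsum n (fun i => f i * (if Nat.eqb i k then 1 else 0)) = f k.
Proof.
  induction n; intro H; [lia|]. simpl. destruct (Nat.eqb_spec n k).
  - subst. rewrite (Rsum_ext _ _ (fun _ => 0)). rewrite Rsum_zero; ring.
    intros i Hi. destruct (Nat.eqb_spec i k); [lia|ring].
  - rewrite IHn by lia. ring.
Qed.

Lemma Rsum_add n f g : Rsum n (fun i => f i + g i) = Rsum n f + Rsum n g.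
Proof. induction n; simpl. ring. rewrite IHn; ring. Qed.

Lemma Rsum_scal n c f : Rsum n (fun i => c * f i) = c * Rsum n f.
Proof. induction n; simpl. ring. rewrite IHn; ring. Qed.

Lemma Rsum_exchange n m f : Rsum n (fun i => Rsum m (fun j => f i j)) = Rsum m (fun j => Rsum n (fun i => f i j)).
Proof.
  induction n; simpl. rewrite Rsum_zero; auto.
  rewrite IHn, <- Rsum_add. reflexivity.
Qed.

Lemma Csum_RtoC n f : Csum n (fun i => RtoC (f i)) = RtoC (Rsum n f).
Proof. induction n; simpl. reflexivity. rewrite IHn. unfold RtoC, Cadd; simpl. apply Cpair_eq; ring. Qed.

Lemma INR_pos_sub_neg (a : Z) : INR (Z.to_nat a) - INR (Z.to_nat (- a)) = IZR a.
Proof.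
  rewrite !INR_IZR_INZ. destruct (Z_le_gt_dec 0 a).
  - replace (Z.to_nat (-a)) with 0%nat by lia. rewrite Z2Nat.id by lia. simpl. ring.
  - replace (Z.to_nat a) with 0%nat by lia. rewrite Z2Nat.id by lia. rewrite opp_IZR. simpl. ring.
Qed.

Lemma RtoC_mul a b : Cmul (RtoC a) (RtoC b) = RtoC (a * b).
Proof. unfold RtoC, Cmul; simpl. apply Cpair_eq; ring. Qed.
Lemma RtoC_sub a b : Csub (RtoC a) (RtoC b) = RtoC (a - b).
Proof. unfold RtoC, Csub, Cadd, Copp; simpl. apply Cpair_eq; ring. Qed.

Lemma Rsum_sub n' f g : Rsum n' (fun i => f i - g i) = Rsum n' f - Rsum n' g.
Proof. induction n'; simpl. ring. rewrite IHn'; ring. Qed.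

Lemma Cprod_cis n' f : Cprod n' (fun i => cis (f i)) = cis (Rsum n' f).
Proof. induction n'; simpl. rewrite cis_0; auto. rewrite IHn', cis_add. reflexivity. Qed.

Lemma natsum_pos_sub_neg n' (a : nat -> Z) (d' : nat -> nat) :
  (Z.of_nat (natsum n' (fun i => (d' i * Z.to_nat (a i))%nat)) - Z.of_nat (natsum n' (fun i => (d' i * Z.to_nat (- a i))%nat)))%Z
  = Zsum n' (fun j => (a j * Z.of_nat (d' j))%Z).
Proof. induction n'; simpl. reflexivity. rewrite <- IHn'. rewrite !Nat2Z.inj_add, !Nat2Z.inj_mul. lia. Qed.

Lemma Csum_norm n f : Cnorm (Csum n f) <= Rsum n (fun j => Cnorm (f j)).
Proof. induction n; simpl. rewrite Cnorm_C0; lra. eapply Rle_trans. apply Cnorm_triangle. lra. Qed.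

Lemma Rsum_le n f g : (forall i, (i < n)%nat -> f i <= g i) -> Rsum n f <= Rsum n g.
Proof. induction n; intro H; simpl. lra. apply Rplus_le_compat; auto. Qed.

Lemma Rsum_nonneg n f : (forall i, (i < n)%nat -> 0 <= f i) -> 0 <= Rsum n f.
Proof. intro H. rewrite <- (Rsum_zero n). apply Rsum_le; auto. Qed.

Lemma Rsum_term n f i : (forall j, (j < n)%nat -> 0 <= f j) -> (i < n)%nat -> f i <= Rsum n f.
Proof.
  induction n; intros H Hi. lia. simpl. destruct (Nat.eq_dec i n).
  - subst. assert (0 <= Rsum n f) by (apply Rsum_nonneg; auto). lra.
  - assert (f i <= Rsum n f) by (apply IHn; auto; lia). specialize (H n ltac:(lia)). lra.
Qed.
Lemma Cnorm_pow_le t d : Cnorm t <= 1 -> (0 < d)%nat -> Cnorm (Cpow t d) <= Cnorm t.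
Proof.
  intros H Hd. rewrite Cnorm_pow. destruct d; [lia|]. simpl.
  pose proof (Cnorm_nonneg t). assert (Cnorm t ^ d <= 1) by (rewrite <- (pow1 d); apply pow_incr; lra).
  assert (0 <= Cnorm t ^ d) by (apply pow_le; auto). nra.
Qed.

Lemma Cadd1_neq0 w : Cnorm w < 1 -> Cadd C1 w <> C0.
Proof.
  intros H E. assert (w = Copp C1) by (transitivity (Csub (Cadd C1 w) C1); [ring|rewrite E; ring]).
  rewrite H0, Cnorm_opp, Cnorm_C1 in H. lra.
Qed.

Lemma Csub1_neq0 w : Cnorm w < 1 -> Csub C1 w <> C0.
Proof. intro H. unfold Csub. apply Cadd1_neq0. rewrite Cnorm_opp. auto. Qed.

Lemma neq_C1 w : Cnorm w < 1 -> w <> C1.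
Proof. intros H E. rewrite E, Cnorm_C1 in H. lra. Qed.

Lemma gluing_monomial_ext n x x' z : (forall j, (j < 2 * n)%nat -> x j = x' j) -> gluing_monomial n x z = gluing_monomial n x' z.
Proof. intro H; unfold gluing_monomial. apply Cprod_ext; intros i Hi. rewrite !H by lia. reflexivity. Qed.

Definition off_0_1 (n : nat) (z : nat -> C) := forall i, (i < n)%nat -> z i <> C0 /\ Csub C1 (z i) <> C0.

Lemma gluing_monomial_add n x y z : off_0_1 n z ->
  gluing_monomial n (fun j => (x j + y j)%Z) z = Cmul (gluing_monomial n x z) (gluing_monomial n y z).
Proof.
  intro H; unfold gluing_monomial. rewrite <- Cprod_mul. apply Cprod_ext; intros i Hi.
  destruct (H i Hi). rewrite !Cpowz_add by auto. ring.
Qed.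

Lemma gluing_monomial_scale n x k z : off_0_1 n z ->
  gluing_monomial n (fun j => (k * x j)%Z) z = Cpowz (gluing_monomial n x z) k.
Proof.
  intro H; unfold gluing_monomial. rewrite <- Cprod_Cpowz.
  - apply Cprod_ext; intros i Hi. destruct (H i Hi).
    rewrite (Z.mul_comm k), (Z.mul_comm k), !Cpowz_mul by auto. rewrite Cpowz_mulbase; auto; apply Cpowz_neq0; auto.
  - intros i Hi; destruct (H i Hi). apply Cmul_neq0; apply Cpowz_neq0; auto.
Qed.

Lemma gluing_monomial_zero n z : gluing_monomial n (fun _ => 0%Z) z = C1.
Proof. unfold gluing_monomial. rewrite (Cprod_ext n _ (fun _ => C1)).
  - clear. induction n; simpl; auto. rewrite IHn. ring.
  - intros; simpl. ring. Qed.

Lemma gluing_monomial_lattice n r M z : off_0_1 n z ->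
  (forall k, (k < r)%nat -> gluing_monomial n (M k) z = sgnZ (M k (2 * n)%nat)) ->
  forall x, in_lattice n r M x -> gluing_monomial n x z = sgnZ (x (2 * n)%nat).
Proof.
  intros Hz Hrow x [kk Hx].
  assert (gain : forall r', (r' <= r)%nat ->
    gluing_monomial n (fun j => Zsum r' (fun i => (kk i * M i j)%Z)) z = sgnZ (Zsum r' (fun i => (kk i * M i (2*n)%nat)%Z))).
  { induction r'; intros Hr; simpl.
    - rewrite gluing_monomial_zero. reflexivity.
    - rewrite gluing_monomial_add, gluing_monomial_scale, IHr', Hrow, sgnZ_add, sgnZ_mul by (auto; lia). reflexivity. }
  rewrite (gluing_monomial_ext n x (fun j => Zsum r (fun i => (kk i * M i j)%Z))).
  - rewrite gain by lia. rewrite Hx by lia. reflexivity.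
  - intros j Hj; apply Hx; lia.
Qed.

Lemma in_V_in_Vbar n r M z : in_V n r M z -> in_Vbar n r M z.
Proof.
  intros HV. split.
  - intros i Hi. apply (proj1 HV i Hi).
  - intros eps He. exists z. split; auto. intros i Hi. replace (Csub (z i) (z i)) with C0 by ring. rewrite Cnorm_C0; auto.
Qed.

Module RealMatrix.
Import all_boot all_algebra Rstruct GRing.Theory.

Lemma sumE (n : nat) (F : nat -> R) : (\sum_(i < n) F i)%R = Rsum n F.
Proof. elim: n => [|n IH]; first by rewrite big_ord0. by rewrite big_ord_recr /= IH. Qed.

Lemma right_inverse (m n : nat) (V : nat -> nat -> Z) :
  rows_R_indep n V m (fun i => i) ->
  exists Psi : nat -> nat -> R, forall k j, (k < m)%coq_nat -> (j < m)%coq_nat ->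
    Rsum n (fun i => IZR (V k i) * Psi i j) = if Nat.eqb k j then 1 else 0.
Proof.
Local Open Scope ring_scope.
move=> Hind.
pose W : 'M[R]_(m, n) := \matrix_(i, j) IZR (V i j).
have Hfree : row_free W.
  rewrite -kermx_eq0; apply/negPn/negP => /rowV0Pn [v /sub_kermxP vW /rV0Pn [i vi]].
  pose c (k : nat) : R := if (k < m)%N =P true is ReflectT hk then v 0 (Ordinal hk) else 0.
  have Hc : forall j, (j < n)%coq_nat -> Rsum m (fun i => c i * IZR (V i j))%R = 0.
    move=> j /ltP hj.
    have := congr1 (fun M : 'M[R]_(1,n) => M 0 (Ordinal hj)) vW; rewrite !mxE => E; rewrite -sumE -[RHS]E.
    apply: eq_bigr => k _; rewrite !mxE /c.
    case: eqP => [hk|]; last by rewrite ltn_ord.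
    by congr (_ * _); congr (v 0 _); apply: val_inj.
  have := Hind c Hc i (elimT ltP (ltn_ord i)).
  rewrite /c; case: eqP => [hk|]; last by rewrite ltn_ord.
  move=> H; apply: (negP vi); apply/eqP; rewrite -[RHS]H; congr (v 0 _); exact: val_inj.
move/row_freeP: Hfree => [B HB].
exists (fun i j => if ((i < n) && (j < m))%N =P true is ReflectT h
  then B (Ordinal (proj1 (andP h))) (Ordinal (proj2 (andP h))) else 0).
move=> k j /ltP hk /ltP hj.
have E := congr1 (fun M : 'M[R]_(m,m) => M (Ordinal hk) (Ordinal hj)) HB; rewrite /= !mxE in E.
rewrite -sumE.
transitivity (\sum_(i<n) W (Ordinal hk) i * B i (Ordinal hj)).
  apply: eq_bigr => i _; rewrite mxE; case: eqP => [h|]; last by move=> /negP; rewrite ltn_ord hj.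
  by congr (_ * B _ _); apply: val_inj.
rewrite E; case: (Nat.eqb_spec k j) => [e|ne].
  by subst j; have -> : (Ordinal hk == Ordinal hj) = true by apply/eqP; apply: val_inj.
by have -> : (Ordinal hk == Ordinal hj) = false by apply/negbTE/eqP => -[].
Qed.

Lemma injective_surjective (m r : nat) (s : nat -> nat) : (r <= m)%coq_nat ->
  (forall i, (i < m)%coq_nat -> (s i < r)%coq_nat) ->
  (forall i i', (i < m)%coq_nat -> (i' < m)%coq_nat -> s i = s i' -> i = i') ->
  forall k, (k < r)%coq_nat -> exists i, (i < m)%coq_nat /\ s i = k.
Proof.
move=> /leP hrm hs hinj k /ltP hk.
apply: NNPP => Hno.
pose f (i : 'I_m) : 'I_r := Ordinal (introT ltP (hs i (elimT ltP (ltn_ord i)))).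
have finj : injective f.
  move=> i i' /(congr1 val) /= e; apply: val_inj; apply: hinj => //; exact: (elimT ltP (ltn_ord _)).
have sub : [set f i | i : 'I_m] \subset ~: [set Ordinal hk].
  apply/subsetP => x /imsetP [i _ ->]; rewrite !inE; apply/eqP => -[e].
  apply: Hno; exists i; split => //; exact: (elimT ltP (ltn_ord _)).
have := subset_leq_card sub.
rewrite card_imset // cardsC1 ?cardsT !card_ord => h.
move: (leq_trans hrm h); clear -hk; case: r hk => // r0 _ /=; by rewrite ltnn.
Qed.
End RealMatrix.

Lemma rows_R_indep_injective m A q s :
  rows_R_indep m A q s ->
  forall i i', (i < q)%nat -> (i' < q)%nat -> s i = s i' -> i = i'.
Proof.
  intros Hind i i' Hi Hi' E. destruct (Nat.eq_dec i i') as [|Ne]; auto. exfalso.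
  set (c := fun l => (if Nat.eqb l i then 1 else 0) - (if Nat.eqb l i' then 1 else 0)).
  assert (Hc : c i = 0).
  { apply (Hind c); auto. intros j Hj. unfold c.
    rewrite (Rsum_ext _ _ (fun l => IZR (A (s l) j) * (if Nat.eqb l i then 1 else 0)
      + - 1 * (IZR (A (s l) j) * (if Nat.eqb l i' then 1 else 0)))) by (intros; ring).
    rewrite Rsum_add, Rsum_scal, !Rsum_delta by auto. rewrite E. ring. }
  unfold c in Hc. rewrite Nat.eqb_refl in Hc. destruct (Nat.eqb_spec i i'); [lia|]. lra.
Qed.

(* With [r <= n - 1 = rank A], the [n - 1] independent rows of [A] are all [r] rows, up to order. *)
Lemma blockA_right_inverse n r (M : nat -> nat -> Z) :
  (r <= n - 1)%nat -> mat_rank r n (blockA M) (n - 1) ->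
  exists Psi : nat -> nat -> R, forall k k', (k < r)%nat -> (k' < r)%nat ->
    Rsum n (fun i => IZR (M k i) * Psi i k') = (if Nat.eqb k k' then 1 else 0).
Proof.
  intros Hr [[s [Hs Hind]] _]. unfold blockA in *.
  pose proof (rows_R_indep_injective _ _ _ _ Hind) as Hinj.
  assert (Hsurj : forall k, exists i, (k < r)%nat -> (i < n - 1)%nat /\ s i = k).
  { intro k. destruct (lt_dec k r) as [Hk|Hk].
    - destruct (RealMatrix.injective_surjective (n - 1) r s Hr Hs Hinj k Hk) as [i Hi].
      exists i; auto.
    - exists 0%nat; intro; lia. }
  destruct (functional_choice _ Hsurj) as [kap Hkap].
  destruct (RealMatrix.right_inverse (n - 1) n (fun i j => M (s i) j) Hind) as [Psi0 HPsi0].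
  exists (fun i k => Psi0 i (kap k)). intros k k' Hk Hk'.
  destruct (Hkap k Hk) as [H1 H2]. destruct (Hkap k' Hk') as [H3 H4].
  pose proof (HPsi0 (kap k) (kap k') H1 H3) as HP. cbv beta in HP. rewrite H2 in HP. rewrite HP.
  destruct (Nat.eqb_spec (kap k) (kap k')) as [E|E];
    destruct (Nat.eqb_spec k k') as [E'|E']; auto.
  - exfalso. apply E'. rewrite <- H2, <- H4, E. reflexivity.
  - subst; contradiction.
Qed.

Definition vbound (N : nat) (x : nat -> C) (e : R) := forall j, (j < N)%nat -> Cnorm (x j) <= e.
Definition vsub (x y : nat -> C) : nat -> C := fun j => Csub (x j) (y j).

(* [C11_bound N g Dg K]: on the closed unit polydisc of [C^N], [g] is differentiable with partial
   derivatives [Dg j], which are Lipschitz, and [g] has a quadratic first-order Taylor remainder,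
   everything with constant [K]. *)
Definition C11_bound (N : nat) (g : (nat -> C) -> C) (Dg : nat -> (nat -> C) -> C) (K : R) : Prop :=
  0 <= K /\
  (forall x, vbound N x 1 -> Cnorm (g x) <= K) /\
  (forall j x, (j < N)%nat -> vbound N x 1 -> Cnorm (Dg j x) <= K) /\
  (forall j x y e, (j < N)%nat -> 0 <= e -> vbound N x 1 -> vbound N y 1 -> vbound N (vsub y x) e ->
     Cnorm (Csub (Dg j y) (Dg j x)) <= K * e) /\
  (forall x y e, 0 <= e -> vbound N x 1 -> vbound N y 1 -> vbound N (vsub y x) e ->
     Cnorm (Csub (Csub (g y) (g x)) (Csum N (fun j => Cmul (Csub (y j) (x j)) (Dg j x)))) <= K * (e * e)).

Definition C11 (N : nat) (g : (nat -> C) -> C) (Dg : nat -> (nat -> C) -> C) : Prop :=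
  exists K, C11_bound N g Dg K.

Lemma C11_bound_mono N g Dg K K' : C11_bound N g Dg K -> K <= K' -> C11_bound N g Dg K'.
Proof.
  intros (HK & H1 & H2 & H3 & H4) HKK. repeat split.
  - lra.
  - intros; eapply Rle_trans; [apply H1|]; auto.
  - intros; eapply Rle_trans; [apply H2|]; auto.
  - intros; eapply Rle_trans; [apply H3|]; eauto. apply Rmult_le_compat_r; auto.
  - intros; eapply Rle_trans; [apply H4|]; eauto. apply Rmult_le_compat_r; auto. nra.
Qed.

Lemma Csum_bound N f b : (forall j, (j < N)%nat -> Cnorm (f j) <= b) -> Cnorm (Csum N f) <= INR N * b.
Proof.
  induction N; intros H. simpl. rewrite Cnorm_C0; lra.
  change (Csum (S N) f) with (Cadd (Csum N f) (f N)).
  eapply Rle_trans. apply Cnorm_triangle. rewrite S_INR.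
  assert (Cnorm (Csum N f) <= INR N * b) by (apply IHN; auto). specialize (H N (Nat.lt_succ_diag_r N)). lra.
Qed.

Lemma Csum_add N f g : Csum N (fun j => Cadd (f j) (g j)) = Cadd (Csum N f) (Csum N g).
Proof. induction N; simpl. ring. rewrite IHN; ring. Qed.
Lemma Csum_scal N c f : Csum N (fun j => Cmul c (f j)) = Cmul c (Csum N f).
Proof. induction N; simpl. ring. rewrite IHN; ring. Qed.
Lemma Csum_sub n f g : Csum n (fun j => Csub (f j) (g j)) = Csub (Csum n f) (Csum n g).
Proof. induction n; simpl. ring. rewrite IHn; ring. Qed.

Lemma Csum_zero N : Csum N (fun _ => C0) = C0.
Proof. induction N; simpl; auto. rewrite IHN; ring. Qed.
Lemma Csum_delta N j0 f : (j0 < N)%nat -> Csum N (fun j => Cmul (f j) (if Nat.eqb j j0 then C1 else C0)) = f j0.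
Proof.
  induction N; intros H; [lia|]. simpl.
  destruct (Nat.eqb_spec N j0).
  - subst. rewrite (Csum_ext _ _ (fun _ => C0)). rewrite Csum_zero; ring.
    intros i Hi. destruct (Nat.eqb_spec i j0); [lia|ring].
  - rewrite IHN by lia. ring.
Qed.

Lemma C11_lipschitz N g Dg : C11 N g Dg -> exists L, 0 <= L /\
  forall x y e, 0 <= e -> vbound N x 1 -> vbound N y 1 -> vbound N (vsub y x) e -> Cnorm (Csub (g y) (g x)) <= L * e.
Proof.
  intros (K & HK & Hb & HDb & HDl & Hr). exists ((INR N + 2) * K). split.
  { pose proof (pos_INR N). nra. }
  intros x y e He Hx Hy Hyx.
  destruct (Rle_dec e 2).
  - specialize (Hr x y e He Hx Hy Hyx).
    assert (Cnorm (Csum N (fun j => Cmul (Csub (y j) (x j)) (Dg j x))) <= INR N * (e * K)).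
    { apply Csum_bound. intros j Hj. rewrite Cnorm_mul. apply Rmult_le_compat; [apply Cnorm_nonneg|apply Cnorm_nonneg|apply (Hyx j Hj)|apply HDb; auto]. }
    set (S := Csum N _) in *.
    replace (Csub (g y) (g x)) with (Cadd (Csub (Csub (g y) (g x)) S) S) by ring.
    eapply Rle_trans. apply Cnorm_triangle. pose proof (pos_INR N).
    assert (K*(e*e) <= K*(2*e)) by (apply Rmult_le_compat_l; nra). nra.
  - eapply Rle_trans. apply Cnorm_sub. pose proof (Hb x Hx). pose proof (Hb y Hy).
    pose proof (pos_INR N). assert (K*2 <= K*e) by (apply Rmult_le_compat_l; lra).
    assert (0 <= INR N * K * e) by (apply Rmult_le_pos; [apply Rmult_le_pos|]; lra). nra.
Qed.

Lemma C11_ext N g Dg g' Dg' : C11 N g Dg ->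
  (forall x, vbound N x 1 -> g x = g' x) -> (forall j x, (j < N)%nat -> vbound N x 1 -> Dg j x = Dg' j x) ->
  C11 N g' Dg'.
Proof.
  intros (K & HK & Hb & HDb & HDl & Hr) Eg ED. exists K. repeat split; auto.
  - intros x Hx. rewrite <- Eg; auto.
  - intros j x Hj Hx. rewrite <- ED; auto.
  - intros j x y e Hj He Hx Hy Hyx. rewrite <- !ED; auto.
  - intros x y e He Hx Hy Hyx. rewrite <- !Eg by auto.
    rewrite (Csum_ext _ _ (fun j => Cmul (Csub (y j) (x j)) (Dg j x))). auto.
    intros j Hj; rewrite ED; auto.
Qed.

Lemma C11_const N c : C11 N (fun _ => c) (fun _ _ => C0).
Proof.
  exists (Cnorm c). repeat split.
  - apply Cnorm_nonneg.
  - intros; lra.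
  - intros; rewrite Cnorm_C0; apply Cnorm_nonneg.
  - intros. replace (Csub C0 C0) with C0 by ring. rewrite Cnorm_C0. pose proof (Cnorm_nonneg c). nra.
  - intros. rewrite (Csum_ext _ _ (fun _ => C0)). rewrite Csum_zero.
    replace (Csub (Csub c c) C0) with C0 by ring. rewrite Cnorm_C0. pose proof (Cnorm_nonneg c). nra.
    intros; ring.
Qed.

Lemma C11_var N j0 : (j0 < N)%nat -> C11 N (fun x => x j0) (fun j _ => if Nat.eqb j j0 then C1 else C0).
Proof.
  intro Hj0. exists 1. repeat split.
  - lra.
  - intros x Hx; apply Hx; auto.
  - intros j x _ _. destruct (Nat.eqb j j0). rewrite Cnorm_C1; lra. rewrite Cnorm_C0; lra.
  - intros. replace (Csub _ _) with C0 by ring. rewrite Cnorm_C0. lra.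
  - intros. rewrite (Csum_delta N j0 (fun j => Csub (y j) (x j))) by auto.
    replace (Csub _ _) with C0 by ring. rewrite Cnorm_C0. nra.
Qed.

Lemma C11_add N g Dg h Dh : C11 N g Dg -> C11 N h Dh ->
  C11 N (fun x => Cadd (g x) (h x)) (fun j x => Cadd (Dg j x) (Dh j x)).
Proof.
  intros (K1 & HK1 & Hb1 & HDb1 & HDl1 & Hr1) (K2 & HK2 & Hb2 & HDb2 & HDl2 & Hr2).
  exists (K1 + K2). repeat split.
  - lra.
  - intros x Hx. eapply Rle_trans. apply Cnorm_triangle. specialize (Hb1 x Hx); specialize (Hb2 x Hx); lra.
  - intros j x Hj Hx. eapply Rle_trans. apply Cnorm_triangle. specialize (HDb1 j x Hj Hx); specialize (HDb2 j x Hj Hx); lra.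
  - intros j x y e Hj He Hx Hy Hyx.
    replace (Csub _ _) with (Cadd (Csub (Dg j y) (Dg j x)) (Csub (Dh j y) (Dh j x))) by ring.
    eapply Rle_trans. apply Cnorm_triangle. specialize (HDl1 j x y e Hj He Hx Hy Hyx); specialize (HDl2 j x y e Hj He Hx Hy Hyx); lra.
  - intros x y e He Hx Hy Hyx.
    rewrite (Csum_ext _ _ (fun j => Cadd (Cmul (Csub (y j) (x j)) (Dg j x)) (Cmul (Csub (y j) (x j)) (Dh j x)))) by (intros; ring).
    rewrite Csum_add.
    specialize (Hr1 x y e He Hx Hy Hyx); specialize (Hr2 x y e He Hx Hy Hyx).
    set (S1 := Csum N (fun j => Cmul (Csub (y j) (x j)) (Dg j x))) in *.
    set (S2 := Csum N (fun j => Cmul (Csub (y j) (x j)) (Dh j x))) in *.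
    replace (Csub _ _) with (Cadd (Csub (Csub (g y) (g x)) S1) (Csub (Csub (h y) (h x)) S2)) by ring.
    eapply Rle_trans. apply Cnorm_triangle. rewrite Rmult_plus_distr_r; lra.
Qed.

Lemma Cnorm_mul_le a b A B : Cnorm a <= A -> Cnorm b <= B -> Cnorm (Cmul a b) <= A * B.
Proof. intros. rewrite Cnorm_mul. apply Rmult_le_compat; auto using Cnorm_nonneg. Qed.

Lemma Cnorm_add_le a b A B : Cnorm a <= A -> Cnorm b <= B -> Cnorm (Cadd a b) <= A + B.
Proof. intros. eapply Rle_trans. apply Cnorm_triangle. lra. Qed.

Lemma C11_mul N g Dg h Dh : C11 N g Dg -> C11 N h Dh ->
  C11 N (fun x => Cmul (g x) (h x)) (fun j x => Cadd (Cmul (g x) (Dh j x)) (Cmul (h x) (Dg j x))).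
Proof.
  intros Hg Hh.
  destruct (C11_lipschitz _ _ _ Hg) as (L1 & HL1 & Lg).
  destruct (C11_lipschitz _ _ _ Hh) as (L2 & HL2 & Lh).
  destruct Hg as (K1 & HK1 & Hb1 & HDb1 & HDl1 & Hr1).
  destruct Hh as (K2 & HK2 & Hb2 & HDb2 & HDl2 & Hr2).
  pose proof (pos_INR N) as HN.
  assert (P12 : 0 <= K1 * K2) by nra.
  assert (PL1 : 0 <= L1 * K2) by nra. assert (PL2 : 0 <= L2 * K1) by nra.
  assert (num_eq_den : 0 <= INR N * L1 * K2) by (apply Rmult_le_pos; nra).
  exists (2 * (K1 * K2) + L1 * K2 + L2 * K1 + INR N * L1 * K2). repeat split.
  - lra.
  - intros x Hx. eapply Rle_trans. apply Cnorm_mul_le; [apply Hb1|apply Hb2]; auto. lra.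
  - intros j x Hj Hx. eapply Rle_trans. apply Cnorm_add_le; apply Cnorm_mul_le; eauto. lra.
  - intros j x y e Hj He Hx Hy Hyx.
    replace (Csub _ _) with (Cadd (Cadd (Cmul (g y) (Csub (Dh j y) (Dh j x))) (Cmul (Csub (g y) (g x)) (Dh j x)))
                                  (Cadd (Cmul (h y) (Csub (Dg j y) (Dg j x))) (Cmul (Csub (h y) (h x)) (Dg j x)))) by ring.
    eapply Rle_trans.
    apply Cnorm_add_le; apply Cnorm_add_le; apply Cnorm_mul_le; eauto.
    assert (K1 * (K2 * e) + L1 * e * K2 + (K2 * (K1 * e) + L2 * e * K1) = (2 * (K1*K2) + L1*K2 + L2*K1) * e) by ring.
    assert (0 <= INR N * L1 * K2 * e) by (apply Rmult_le_pos; lra). nra.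
  - intros x y e He Hx Hy Hyx.
    rewrite (Csum_ext _ _ (fun j => Cadd (Cmul (g x) (Cmul (Csub (y j) (x j)) (Dh j x))) (Cmul (h x) (Cmul (Csub (y j) (x j)) (Dg j x))))) by (intros; ring).
    rewrite Csum_add, !Csum_scal.
    specialize (Hr1 x y e He Hx Hy Hyx); specialize (Hr2 x y e He Hx Hy Hyx).
    specialize (Lg x y e He Hx Hy Hyx).
    assert (HSh : Cnorm (Csum N (fun j => Cmul (Csub (y j) (x j)) (Dh j x))) <= INR N * (e * K2)).
    { apply Csum_bound. intros j Hj. apply Cnorm_mul_le; auto. apply Hyx; auto. }
    set (Sg := Csum N (fun j => Cmul (Csub (y j) (x j)) (Dg j x))) in *.
    set (Sh := Csum N (fun j => Cmul (Csub (y j) (x j)) (Dh j x))) in *.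
    replace (Csub _ _) with (Cadd (Cadd (Cmul (g y) (Csub (Csub (h y) (h x)) Sh)) (Cmul (Csub (g y) (g x)) Sh))
                                  (Cmul (h x) (Csub (Csub (g y) (g x)) Sg))) by ring.
    eapply Rle_trans.
    apply Cnorm_add_le; [apply Cnorm_add_le|]; apply Cnorm_mul_le; eauto.
    assert (K1 * (K2 * (e * e)) + L1 * e * (INR N * (e * K2)) + K2 * (K1 * (e * e)) = (2 * (K1*K2) + INR N * L1 * K2) * (e*e)) by ring.
    assert (0 <= (L1 * K2 + L2 * K1) * (e * e)) by (apply Rmult_le_pos; nra). nra.
Qed.

Lemma C11_scal N c g Dg : C11 N g Dg -> C11 N (fun x => Cmul c (g x)) (fun j x => Cmul c (Dg j x)).
Proof.
  intro H. eapply C11_ext. apply (C11_mul N _ _ _ _ (C11_const N c) H).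
  - reflexivity.
  - intros; simpl; ring.
Qed.

Lemma C11_sub N g Dg h Dh : C11 N g Dg -> C11 N h Dh ->
  C11 N (fun x => Csub (g x) (h x)) (fun j x => Csub (Dg j x) (Dh j x)).
Proof.
  intros H1 H2. eapply C11_ext. apply (C11_add N _ _ _ _ H1 (C11_scal N (Copp C1) _ _ H2)).
  - intros; simpl; ring.
  - intros; simpl; ring.
Qed.

Lemma Cnorm_le_sum z : Cnorm z <= Rabs (fst z) + Rabs (snd z).
Proof.
  destruct z as [x y]; unfold Cnorm; simpl.
  rewrite <- (sqrt_square (Rabs x + Rabs y)) by (pose proof (Rabs_pos x); pose proof (Rabs_pos y); lra).
  apply sqrt_le_1_alt.
  assert (x * x = Rabs x * Rabs x) by (rewrite <- Rabs_mult; rewrite Rabs_right; nra).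
  assert (y * y = Rabs y * Rabs y) by (rewrite <- Rabs_mult; rewrite Rabs_right; nra).
  pose proof (Rabs_pos x); pose proof (Rabs_pos y). nra.
Qed.

Lemma Cauchy_seq_limit (u : nat -> C) (b : nat -> R) :
  (forall p q, (p <= q)%nat -> Cnorm (Csub (u q) (u p)) <= b p) ->
  (forall eps, 0 < eps -> exists N, forall p, (N <= p)%nat -> b p < eps) ->
  exists l, forall p, Cnorm (Csub l (u p)) <= b p.
Proof.
  intros Hc Hb.
  assert (Cc : forall (f : C -> R), (forall z, Rabs (f z) <= Cnorm z) -> (forall z w, f (Csub z w) = f z - f w) -> Cauchy_crit (fun p => f (u p))).
  { intros f Hf Hl eps Heps. destruct (Hb eps Heps) as [N HN]. exists N. intros p q Hp Hq. unfold Rdist.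
    destruct (le_ge_dec p q).
    - rewrite Rabs_minus_sym, <- Hl. eapply Rle_lt_trans. apply Hf. eapply Rle_lt_trans. apply Hc; auto. apply HN; lia.
    - rewrite <- Hl. eapply Rle_lt_trans. apply Hf. eapply Rle_lt_trans. apply Hc; lia. apply HN; lia. }
  destruct (R_complete _ (Cc fst Cnorm_fst (fun z w => eq_refl))) as [lr Hr].
  destruct (R_complete _ (Cc snd Cnorm_snd (fun z w => eq_refl))) as [li Hi].
  exists (lr, li). intro p. apply Rnot_lt_le. intro Hlt.
  assert (Hdl : (Cnorm (Csub (lr, li) (u p)) - b p) / 2 > 0) by lra.
  destruct (Hr _ Hdl) as [N1 HN1]. destruct (Hi _ Hdl) as [N2 HN2].
  specialize (HN1 (N1 + N2 + p)%nat ltac:(lia)). specialize (HN2 (N1 + N2 + p)%nat ltac:(lia)).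
  set (q := (N1 + N2 + p)%nat) in *.
  unfold Rdist in *. pose proof (Hc p q ltac:(unfold q; lia)) as Hpq.
  assert (A : Cnorm (Csub (lr, li) (u q)) < Cnorm (Csub (lr, li) (u p)) - b p).
  { eapply Rle_lt_trans. apply Cnorm_le_sum.
    replace (fst (Csub (lr, li) (u q))) with (lr - fst (u q)) by (simpl; ring).
    replace (snd (Csub (lr, li) (u q))) with (li - snd (u q)) by (simpl; ring). rewrite (Rabs_minus_sym (fst (u q))) in HN1. rewrite (Rabs_minus_sym (snd (u q))) in HN2. lra. }
  assert (B : Cnorm (Csub (lr, li) (u p)) <= Cnorm (Csub (lr, li) (u q)) + Cnorm (Csub (u q) (u p))).
  { replace (Csub (lr, li) (u p)) with (Cadd (Csub (lr, li) (u q)) (Csub (u q) (u p))) by ring. apply Cnorm_triangle. }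
  lra.
Qed.

Fixpoint vsup (m : nat) (v : nat -> C) : R :=
  match m with O => 0 | S m' => Rmax (vsup m' v) (Cnorm (v m')) end.

Lemma vsup_nonneg m v : 0 <= vsup m v.
Proof. induction m; simpl. lra. eapply Rle_trans. apply IHm. apply Rmax_l. Qed.

Lemma vbound_vsup m v : vbound m v (vsup m v).
Proof.
  induction m; intros j Hj. lia. simpl. destruct (Nat.eq_dec j m).
  - subst. apply Rmax_r.
  - eapply Rle_trans. apply IHm. lia. apply Rmax_l.
Qed.

Lemma vsup_le m v e : 0 <= e -> vbound m v e -> vsup m v <= e.
Proof.
  induction m; intros He H; simpl. auto.
  apply Rmax_lub. apply IHm; auto. intros j Hj; apply H; lia. apply H; lia.
Qed.

Lemma vbound_mono m v e e' : vbound m v e -> e <= e' -> vbound m v e'.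
Proof. intros H He j Hj. eapply Rle_trans. apply H; auto. auto. Qed.

Lemma INR_le_pow2 n : INR n <= 2 ^ n.
Proof. induction n. simpl; lra. rewrite S_INR. simpl. assert (1 <= 2 ^ n) by (apply pow_R1_Rle; lra). lra. Qed.

Lemma div_pow2_small c : forall eps, 0 < eps -> exists N, forall p, (N <= p)%nat -> c / 2 ^ p < eps.
Proof.
  intros eps He. destruct (archimed (Rabs c / eps)) as [H1 H2].
  exists (Z.to_nat (up (Rabs c / eps))). intros p Hp.
  assert (Hp2 : 0 < 2 ^ p) by (apply pow_lt; lra).
  apply (Rmult_lt_reg_r (2 ^ p)); auto. unfold Rdiv. rewrite Rmult_assoc, Rinv_l by lra. rewrite Rmult_1_r.
  assert (INR p >= IZR (up (Rabs c / eps))).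
  { rewrite INR_IZR_INZ. apply Rle_ge, IZR_le. lia. }
  pose proof (INR_le_pow2 p).
  assert (Rabs c / eps < 2 ^ p) by lra.
  apply (Rmult_lt_compat_r eps) in H3; auto. unfold Rdiv in H3. rewrite Rmult_assoc, Rinv_l, Rmult_1_r in H3 by lra.
  pose proof (Rle_abs c). lra.
Qed.

Lemma Rdiv_nonneg a b : 0 <= a -> 0 < b -> 0 <= a / b.
Proof. intros. unfold Rdiv. apply Rmult_le_pos; auto. left; apply Rinv_0_lt_compat; auto. Qed.

Lemma le_of_le_add_div_pow2 a c b : (forall p, a <= c + b / 2 ^ p) -> a <= c.
Proof.
  intro H. apply Rnot_lt_le. intro Hlt. destruct (div_pow2_small b (a - c)) as [N HN]. lra.
  specialize (HN N (le_n N)). specialize (H N). lra.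
Qed.

Definition vsnoc (m : nat) (s : nat -> C) (t : C) : nat -> C := fun j => if Nat.ltb j m then s j else t.

Lemma vsnoc_last m s t : vsnoc m s t m = t.
Proof. unfold vsnoc. rewrite Nat.ltb_irrefl. reflexivity. Qed.

Section Contraction.
Variables (m : nat) (Phi : (nat -> C) -> (nat -> C)) (sg : R).
Hypothesis Hsg : 0 <= sg.
Hypothesis Phi_ball : forall s, vbound m s sg -> vbound m (Phi s) sg.
Hypothesis Phi_contraction : forall s s' e, 0 <= e -> vbound m s sg -> vbound m s' sg ->
  vbound m (vsub s' s) e -> vbound m (vsub (Phi s') (Phi s)) (e / 2).

Let iterate p := Nat.iter p Phi (fun _ => C0).

Let pow2_pos p : 0 < 2 ^ p.
Proof. apply pow_lt; lra. Qed.

Lemma iterate_ball p : vbound m (iterate p) sg.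
Proof. induction p. intros j Hj; simpl; rewrite Cnorm_C0; auto. apply Phi_ball; auto. Qed.

Lemma iterate_step p : vbound m (vsub (iterate (S p)) (iterate p)) (2 * sg / 2 ^ p).
Proof.
  induction p.
  - intros j Hj. unfold vsub. simpl. replace (Csub _ C0) with (Phi (fun _ => C0) j) by ring.
    replace (2 * sg / 1) with (2 * sg) by field. pose proof (iterate_ball 1%nat j Hj). simpl in H. lra.
  - pose proof (pow2_pos p). apply (vbound_mono _ _ ((2 * sg / 2 ^ p) / 2)).
    + apply Phi_contraction; auto using iterate_ball. apply Rdiv_nonneg; lra.
    + simpl. right. field. lra.
Qed.

Lemma iterate_cauchy p q : (p <= q)%nat -> vbound m (vsub (iterate q) (iterate p)) (4 * sg / 2 ^ p).
Proof.
  intro Hpq.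
  assert (Hi : forall i, vbound m (vsub (iterate (p + i)) (iterate p)) (4 * sg / 2 ^ p - 4 * sg / 2 ^ (p + i))).
  { induction i; intros j Hj; unfold vsub.
    - rewrite Nat.add_0_r. replace (Csub _ _) with C0 by ring. rewrite Cnorm_C0. right; ring.
    - replace (p + S i)%nat with (S (p + i)) by lia.
      replace (Csub (iterate (S (p + i)) j) (iterate p j)) with
        (Cadd (Csub (iterate (S (p + i)) j) (iterate (p + i) j)) (Csub (iterate (p + i) j) (iterate p j))) by ring.
      eapply Rle_trans. apply Cnorm_triangle.
      pose proof (iterate_step (p + i) j Hj). pose proof (IHi j Hj). unfold vsub in *.
      assert (2 * sg / 2 ^ (p + i) = 4 * sg / 2 ^ (p + i) - 4 * sg / 2 ^ S (p + i)).
      { simpl. field. pose proof (pow2_pos (p + i)); lra. }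
      lra. }
  replace q with (p + (q - p))%nat by lia. eapply vbound_mono. apply Hi.
  assert (0 <= 4 * sg / 2 ^ (p + (q - p))) by (apply Rdiv_nonneg; [lra|apply pow2_pos]). lra.
Qed.

Lemma iterate_limit : exists s, forall k, (k < m)%nat ->
  forall p, Cnorm (Csub (s k) (iterate p k)) <= 4 * sg / 2 ^ p.
Proof.
  assert (Hl : forall k, exists l : C, (k < m)%nat -> forall p, Cnorm (Csub l (iterate p k)) <= 4 * sg / 2 ^ p).
  { intro k. destruct (lt_dec k m) as [Hk|Hk].
    - destruct (Cauchy_seq_limit (fun p => iterate p k) (fun p => 4 * sg / 2 ^ p)) as [l Hl].
      + intros p q Hpq. apply (iterate_cauchy p q Hpq k Hk).
      + apply div_pow2_small.
      + exists l; auto.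
    - exists C0; intro; lia. }
  destruct (functional_choice _ Hl) as [s Hs]. exists s. exact Hs.
Qed.

Lemma contraction_fixpoint : exists s, vbound m s sg /\ forall k, (k < m)%nat -> Phi s k = s k.
Proof.
  destruct iterate_limit as [s Hs].
  assert (Hsb : vbound m s sg).
  { intros k Hk. apply (le_of_le_add_div_pow2 _ _ (4 * sg)). intro p.
    replace (s k) with (Cadd (Csub (s k) (iterate p k)) (iterate p k)) by ring.
    eapply Rle_trans. apply Cnorm_triangle. pose proof (Hs k Hk p). pose proof (iterate_ball p k Hk). lra. }
  exists s. split; auto. intros k Hk.
  assert (Z : Cnorm (Csub (Phi s k) (s k)) = 0).
  2:{ apply Cnorm_eq0 in Z. replace (Phi s k) with (Cadd (Csub (Phi s k) (s k)) (s k)) by ring. rewrite Z. ring. }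
  apply Rle_antisym; [|apply Cnorm_nonneg].
  apply (le_of_le_add_div_pow2 _ _ (4 * sg)). intro p. rewrite Rplus_0_l.
  replace (Csub (Phi s k) (s k)) with
    (Cadd (Csub (Phi s k) (Phi (iterate p) k)) (Csub (iterate (S p) k) (s k))) by (simpl; ring).
  eapply Rle_trans. apply Cnorm_triangle.
  assert (H1 : vbound m (vsub (Phi s) (Phi (iterate p))) (4 * sg / 2 ^ p / 2)).
  { apply Phi_contraction; auto using iterate_ball.
    apply Rdiv_nonneg; [lra|apply pow2_pos]. intros j Hj. apply (Hs j Hj p). }
  pose proof (H1 k Hk). unfold vsub in H.
  pose proof (Hs k Hk (S p)). rewrite Cnorm_sub_sym in H0.
  assert (4 * sg / 2 ^ p / 2 + 4 * sg / 2 ^ S p = 4 * sg / 2 ^ p) by (simpl; field; pose proof (pow2_pos p); lra).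
  lra.
Qed.
End Contraction.

Lemma C11_uniform_bound N m (F : nat -> (nat -> C) -> C) DF :
  (forall k, (k < m)%nat -> C11 N (F k) (DF k)) -> exists K, 1 <= K /\ forall k, (k < m)%nat -> C11_bound N (F k) (DF k) K.
Proof.
  induction m; intro H.
  - exists 1. split. lra. intros; lia.
  - destruct IHm as [K [HK1 HK]]. intros; apply H; lia.
    destruct (H m (Nat.lt_succ_diag_r m)) as [K' HK'].
    exists (Rmax K K'). split. eapply Rle_trans. apply HK1. apply Rmax_l.
    intros k Hk. destruct (Nat.eq_dec k m).
    + subst. eapply C11_bound_mono. apply HK'. apply Rmax_r.
    + eapply C11_bound_mono. apply HK. lia. apply Rmax_l.
Qed.

(* Implicit function theorem for [s = F(s, t)], [s] in [C^m], [t] in [C], near the origin, where [F] has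
   no linear term in [s]: the solution [s(t)] exists for [|t| <= ift_radius] and is complex differentiable. *)
Section IFT.
Variable m : nat.
Variable F : nat -> (nat -> C) -> C.
Variable DF : nat -> nat -> (nat -> C) -> C.
Variable K : R.
Hypothesis HK1 : 1 <= K.
Hypothesis HF : forall k, (k < m)%nat -> C11_bound (S m) (F k) (DF k) K.
Hypothesis HF0 : forall k, (k < m)%nat -> F k (fun _ => C0) = C0.
Hypothesis HDF0 : forall k j, (k < m)%nat -> (j < m)%nat -> DF k j (fun _ => C0) = C0.

Variable sg : R.
Hypothesis Hsg0 : 0 < sg.
Hypothesis Hsg1 : sg <= 1/2.
Hypothesis Hsg2 : (INR m + 3) * K * sg <= 1/4.
Definition ift_radius := sg / (8 * K).

Lemma ift_radius_pos : 0 < ift_radius.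
Proof. unfold ift_radius. apply Rdiv_lt_0_compat; lra. Qed.
Lemma ift_radius_le : ift_radius <= sg / 8.
Proof. unfold ift_radius. apply Rmult_le_compat_l. lra. apply Rinv_le_contravar; lra. Qed.

Lemma vbound_vsnoc s t e : vbound m s e -> Cnorm t <= e -> vbound (S m) (vsnoc m s t) e.
Proof. intros Hs Ht j Hj. unfold vsnoc. destruct (Nat.ltb_spec j m). apply Hs; auto. auto. Qed.

Lemma vbound_zero N e : 0 <= e -> vbound N (fun _ => C0) e.
Proof. intros He j Hj. rewrite Cnorm_C0; auto. Qed.

Lemma vsub_vsnoc s s' t t' : vsub (vsnoc m s' t') (vsnoc m s t) = vsnoc m (vsub s' s) (Csub t' t).
Proof. apply functional_extensionality; intro j. unfold vsub, vsnoc. destruct (Nat.ltb j m); auto. Qed.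

Lemma DF_small k j x : (k < m)%nat -> (j < m)%nat -> vbound (S m) x sg -> Cnorm (DF k j x) <= K * sg.
Proof.
  intros Hk Hj Hx. destruct (HF k Hk) as (_ & _ & _ & H3 & _).
  replace (DF k j x) with (Csub (DF k j x) (DF k j (fun _ => C0))) by (rewrite HDF0 by auto; ring).
  apply H3; try lia; try lra.
  - apply vbound_zero; lra.
  - eapply vbound_mono; eauto; lra.
  - intros i Hi. unfold vsub. replace (Csub (x i) C0) with (x i) by ring. apply Hx; auto.
Qed.

Lemma linear_part_small k x v e : (k < m)%nat -> vbound (S m) x sg -> vbound m v e -> 0 <= e ->
  Cnorm (Csum m (fun j => Cmul (v j) (DF k j x))) <= INR m * (e * (K * sg)).
Proof.
  intros Hk Hx Hv He. apply Csum_bound. intros j Hj. apply Cnorm_mul_le. apply Hv; auto. apply DF_small; auto.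
Qed.

Lemma Csum_vsnoc_increment s s' t t' (D : nat -> C) :
  Csum (S m) (fun j => Cmul (Csub (vsnoc m s' t' j) (vsnoc m s t j)) (D j)) =
  Cadd (Csum m (fun j => Cmul (Csub (s' j) (s j)) (D j))) (Cmul (Csub t' t) (D m)).
Proof.
  simpl Csum at 1. f_equal.
  - apply Csum_ext. intros j Hj. unfold vsnoc. destruct (Nat.ltb_spec j m); [reflexivity|lia].
  - unfold vsnoc. rewrite Nat.ltb_irrefl. reflexivity.
Qed.

Lemma F_contraction k s s' t e : (k < m)%nat -> vbound m s sg -> vbound m s' sg -> Cnorm t <= sg -> 0 <= e -> vbound m (vsub s' s) e ->
  Cnorm (Csub (F k (vsnoc m s' t)) (F k (vsnoc m s t))) <= e / 4.
Proof.
  intros Hk Hs Hs' Ht He Hv.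
  set (e' := Rmin e (2 * sg)).
  assert (He' : 0 <= e') by (unfold e'; apply Rmin_glb; lra).
  assert (Hv' : vbound m (vsub s' s) e').
  { intros j Hj. unfold e'. apply Rmin_glb. apply Hv; auto. unfold vsub. eapply Rle_trans. apply Cnorm_sub.
    pose proof (Hs j Hj); pose proof (Hs' j Hj); lra. }
  destruct (HF k Hk) as (_ & _ & _ & _ & H4).
  assert (Hx : vbound (S m) (vsnoc m s t) 1) by (apply vbound_vsnoc; [eapply vbound_mono; eauto|]; lra).
  assert (Hy : vbound (S m) (vsnoc m s' t) 1) by (apply vbound_vsnoc; [eapply vbound_mono; eauto|]; lra).
  assert (Hyx : vbound (S m) (vsub (vsnoc m s' t) (vsnoc m s t)) e').
  { rewrite vsub_vsnoc. apply vbound_vsnoc; auto. replace (Csub t t) with C0 by ring. rewrite Cnorm_C0; auto. }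
  specialize (H4 _ _ _ He' Hx Hy Hyx).
  rewrite Csum_vsnoc_increment in H4. replace (Csub t t) with C0 in H4 by ring.
  set (S0 := Csum m (fun j => Cmul (Csub (s' j) (s j)) (DF k j (vsnoc m s t)))) in *.
  assert (HS0 : Cnorm S0 <= INR m * (e' * (K * sg))).
  { apply linear_part_small; auto. apply vbound_vsnoc; auto. }
  replace (Csub (F k (vsnoc m s' t)) (F k (vsnoc m s t))) with
    (Cadd (Csub (Csub (F k (vsnoc m s' t)) (F k (vsnoc m s t))) (Cadd S0 (Cmul C0 (DF k m (vsnoc m s t))))) S0) by ring.
  eapply Rle_trans. apply Cnorm_triangle.
  assert (e' <= e) by apply Rmin_l. assert (e' <= 2 * sg) by apply Rmin_r.
  assert (K * (e' * e') <= K * (2 * sg) * e) by (rewrite <- Rmult_assoc; apply Rmult_le_compat; nra).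
  assert (INR m * (e' * (K * sg)) <= INR m * K * sg * e).
  { pose proof (pos_INR m). replace (INR m * (e'*(K*sg))) with ((INR m*K*sg)*e') by ring.
    apply Rmult_le_compat_l; [|auto]. apply Rmult_le_pos; [apply Rmult_le_pos|]; lra. }
  assert ((INR m + 3) * K * sg * e <= 1/4 * e) by (apply Rmult_le_compat_r; auto).
  pose proof (pos_INR m). nra.
Qed.

Lemma F_lipschitz_t k s t t' : (k < m)%nat -> vbound m s sg -> Cnorm t <= sg -> Cnorm t' <= sg ->
  Cnorm (Csub (F k (vsnoc m s t')) (F k (vsnoc m s t))) <= 2 * K * Cnorm (Csub t' t).
Proof.
  intros Hk Hs Ht Ht'.
  set (h := Csub t' t). assert (Hh : 0 <= Cnorm h) by apply Cnorm_nonneg.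
  assert (Hh1 : Cnorm h <= 1) by (unfold h; eapply Rle_trans; [apply Cnorm_sub|]; lra).
  destruct (HF k Hk) as (_ & _ & H2 & _ & H4).
  assert (Hx : vbound (S m) (vsnoc m s t) 1) by (apply vbound_vsnoc; [eapply vbound_mono; eauto|]; lra).
  assert (Hy : vbound (S m) (vsnoc m s t') 1) by (apply vbound_vsnoc; [eapply vbound_mono; eauto|]; lra).
  assert (Hyx : vbound (S m) (vsub (vsnoc m s t') (vsnoc m s t)) (Cnorm h)).
  { rewrite vsub_vsnoc. apply vbound_vsnoc; [|unfold h; lra]. intros j Hj. unfold vsub. replace (Csub (s j) (s j)) with C0 by ring.
    rewrite Cnorm_C0; auto. }
  specialize (H4 _ _ _ Hh Hx Hy Hyx).
  rewrite Csum_vsnoc_increment in H4.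
  rewrite (Csum_ext m _ (fun _ => C0)) in H4 by (intros; ring). rewrite Csum_zero in H4.
  specialize (H2 m (vsnoc m s t) (Nat.lt_succ_diag_r m) Hx).
  replace (Csub (F k (vsnoc m s t')) (F k (vsnoc m s t))) with
    (Cadd (Csub (Csub (F k (vsnoc m s t')) (F k (vsnoc m s t))) (Cadd C0 (Cmul (Csub t' t) (DF k m (vsnoc m s t))))) (Cmul h (DF k m (vsnoc m s t)))) by (unfold h; ring).
  eapply Rle_trans. apply Cnorm_triangle. rewrite Cnorm_mul.
  assert (K * (Cnorm h * Cnorm h) <= K * Cnorm h) by (apply Rmult_le_compat_l; nra).
  assert (Cnorm h * Cnorm (DF k m (vsnoc m s t)) <= Cnorm h * K) by (apply Rmult_le_compat_l; auto).
  fold h in H4. fold h. lra.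
Qed.

Lemma linear_coeff_le : INR m * K * sg <= 1/4.
Proof. pose proof (pos_INR m). assert (0 <= 3 * K * sg) by nra. nra. Qed.

Lemma vsnoc_zero : vsnoc m (fun _ => C0) C0 = fun _ => C0.
Proof. apply functional_extensionality; intro j; unfold vsnoc; destruct (Nat.ltb j m); auto. Qed.

Lemma implicit_solution_exists t : Cnorm t <= ift_radius -> exists s, vbound m s sg /\ forall k, (k < m)%nat -> F k (vsnoc m s t) = s k.
Proof.
  intro Ht. pose proof ift_radius_le. pose proof ift_radius_pos.
  set (Phi := fun s k => if Nat.ltb k m then F k (vsnoc m s t) else C0).
  destruct (contraction_fixpoint m Phi sg) as [s [Hs Hfix]].
  - lra.
  - intros s Hs k Hk. unfold Phi. destruct (Nat.ltb_spec k m); [|lia].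
    replace (F k (vsnoc m s t)) with (Cadd (Csub (F k (vsnoc m s t)) (F k (vsnoc m (fun _ => C0) t)))
        (Cadd (Csub (F k (vsnoc m (fun _ => C0) t)) (F k (vsnoc m (fun _ => C0) C0))) (F k (vsnoc m (fun _ => C0) C0)))) by ring.
    rewrite vsnoc_zero, HF0 by auto.
    eapply Rle_trans. apply Cnorm_triangle. eapply Rle_trans. apply Rplus_le_compat_l. apply Cnorm_triangle.
    rewrite Cnorm_C0.
    assert (A : Cnorm (Csub (F k (vsnoc m s t)) (F k (vsnoc m (fun _ => C0) t))) <= sg / 4).
    { apply F_contraction; auto. apply vbound_zero; lra. lra. lra. intros j Hj. unfold vsub. replace (Csub (s j) C0) with (s j) by ring. auto. }
    assert (B : Cnorm (Csub (F k (vsnoc m (fun _ => C0) t)) (F k (vsnoc m (fun _ => C0) C0))) <= 2 * K * Cnorm (Csub t C0)).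
    { apply F_lipschitz_t; auto. apply vbound_zero; lra. rewrite Cnorm_C0; lra. lra. }
    rewrite vsnoc_zero, HF0 in B by auto.
    replace (Csub t C0) with t in B by ring.
    assert (2 * K * Cnorm t <= 2 * K * ift_radius) by (apply Rmult_le_compat_l; lra).
    assert (2 * K * ift_radius = sg / 4) by (unfold ift_radius; field; lra).
    lra.
  - intros s s' e He Hs Hs' Hv k Hk. unfold Phi, vsub. destruct (Nat.ltb_spec k m); [|lia].
    eapply Rle_trans. apply (F_contraction k s s' t e); auto; lra. lra.
  - exists s. split; auto. intros k Hk. rewrite <- Hfix by auto. unfold Phi. destruct (Nat.ltb_spec k m); [auto|lia].
Qed.

(* The derivative [l] of the solution in [t] solves [l = D_t F + D_s F . l]; since [D_s F] is small near
   the origin, this linear system is again a contraction. *)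
Lemma implicit_derivative_exists x : vbound (S m) x sg ->
  exists l, vbound m l (2 * K) /\
    forall k, (k < m)%nat -> l k = Cadd (DF k m x) (Csum m (fun j => Cmul (l j) (DF k j x))).
Proof.
  intro Hx. pose proof linear_coeff_le as HmK.
  assert (Hx1 : vbound (S m) x 1) by (eapply vbound_mono; eauto; lra).
  set (Phi := fun (l : nat -> C) k =>
    if Nat.ltb k m then Cadd (DF k m x) (Csum m (fun j => Cmul (l j) (DF k j x))) else C0).
  destruct (contraction_fixpoint m Phi (2 * K)) as [l [Hl Hlfix]].
  - lra.
  - intros l Hl k Hk. unfold Phi. destruct (Nat.ltb_spec k m); [|lia].
    eapply Rle_trans. apply Cnorm_triangle.
    destruct (HF k Hk) as (_ & _ & H2 & _ & _).
    pose proof (H2 m x (Nat.lt_succ_diag_r m) Hx1).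
    pose proof (linear_part_small k x l (2 * K) Hk Hx Hl ltac:(lra)).
    assert (INR m * (2 * K * (K * sg)) = 2 * K * (INR m * K * sg)) by ring.
    assert (2 * K * (INR m * K * sg) <= 2 * K * (1/4)) by (apply Rmult_le_compat_l; lra).
    lra.
  - intros l l' e He Hl Hl' Hv k Hk. unfold Phi, vsub. destruct (Nat.ltb_spec k m); [|lia].
    replace (Csub _ _) with (Csum m (fun j => Cmul (Csub (l' j) (l j)) (DF k j x))).
    2:{ transitivity (Csub (Csum m (fun j => Cmul (l' j) (DF k j x))) (Csum m (fun j => Cmul (l j) (DF k j x)))).
        rewrite <- Csum_sub; apply Csum_ext; intros; ring. ring. }
    eapply Rle_trans. apply (linear_part_small k x (vsub l' l) e); auto.
    assert (INR m * (e * (K * sg)) = e * (INR m * K * sg)) by ring.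
    assert (e * (INR m * K * sg) <= e * (1/4)) by (apply Rmult_le_compat_l; lra). lra.
  - exists l. split; auto. intros k Hk. rewrite <- Hlfix by auto.
    unfold Phi. destruct (Nat.ltb_spec k m); [auto|lia].
Qed.

Lemma implicit_solution_function : exists Sf : C -> nat -> C, forall t, Cnorm t <= ift_radius ->
  vbound m (Sf t) sg /\ forall k, (k < m)%nat -> F k (vsnoc m (Sf t) t) = Sf t k.
Proof.
  assert (HSe : forall t, exists s, Cnorm t <= ift_radius ->
    vbound m s sg /\ forall k, (k < m)%nat -> F k (vsnoc m s t) = s k).
  { intro t. destruct (Rle_dec (Cnorm t) ift_radius) as [Ht|Ht].
    - destruct (implicit_solution_exists t Ht) as [s Hs]. exists s; auto.
    - exists (fun _ => C0). intro; lra. }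
  exact (functional_choice _ HSe).
Qed.

Variable Sf : C -> nat -> C.
Hypothesis HSf : forall t, Cnorm t <= ift_radius ->
  vbound m (Sf t) sg /\ forall k, (k < m)%nat -> F k (vsnoc m (Sf t) t) = Sf t k.

Lemma implicit_solution_lipschitz t0 t1 : Cnorm t0 <= ift_radius -> Cnorm t1 <= ift_radius ->
  vsup m (vsub (Sf t1) (Sf t0)) <= 3 * K * Cnorm (Csub t1 t0).
Proof.
  intros Ht0 Ht1. pose proof ift_radius_le.
  destruct (HSf t0 Ht0) as [Hs0 Hf0]. destruct (HSf t1 Ht1) as [Hs1 Hf1].
  set (D := vsup m (vsub (Sf t1) (Sf t0))).
  assert (HD0 : 0 <= D) by apply vsup_nonneg.
  pose proof (Cnorm_nonneg (Csub t1 t0)).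
  assert (D <= D / 4 + 2 * K * Cnorm (Csub t1 t0)); [|lra].
  apply vsup_le. nra.
  intros j Hj. unfold vsub. rewrite <- (Hf1 j Hj), <- (Hf0 j Hj).
  replace (Csub (F j (vsnoc m (Sf t1) t1)) (F j (vsnoc m (Sf t0) t0))) with
    (Cadd (Csub (F j (vsnoc m (Sf t1) t1)) (F j (vsnoc m (Sf t0) t1)))
          (Csub (F j (vsnoc m (Sf t0) t1)) (F j (vsnoc m (Sf t0) t0)))) by ring.
  eapply Rle_trans. apply Cnorm_triangle. apply Rplus_le_compat.
  - apply F_contraction; auto. lra. apply vbound_vsup.
  - apply F_lipschitz_t; auto; lra.
Qed.

(* The Taylor remainder of [F] between the two solutions is at most [K e^2], and the error of the linear
   approximation feeds back into itself with factor [1/4]. *)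
Lemma implicit_linearization_error t0 h l e :
  Cnorm t0 <= ift_radius -> Cnorm (Cadd t0 h) <= ift_radius ->
  (forall k, (k < m)%nat -> l k = Cadd (DF k m (vsnoc m (Sf t0) t0))
     (Csum m (fun j => Cmul (l j) (DF k j (vsnoc m (Sf t0) t0))))) ->
  0 <= e -> vbound (S m) (vsub (vsnoc m (Sf (Cadd t0 h)) (Cadd t0 h)) (vsnoc m (Sf t0) t0)) e ->
  vsup m (fun k => Csub (Csub (Sf (Cadd t0 h) k) (Sf t0 k)) (Cmul h (l k))) <= 2 * K * (e * e).
Proof.
  intros Ht0 Ht1 Hlf He Hyx. pose proof ift_radius_le. pose proof linear_coeff_le. pose proof (pos_INR m).
  destruct (HSf t0 Ht0) as [Hs0 Hf0]. destruct (HSf _ Ht1) as [Hs1 Hf1].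
  set (t1 := Cadd t0 h) in *. set (s0 := Sf t0) in *. set (s1 := Sf t1) in *.
  set (x := vsnoc m s0 t0) in *. set (y := vsnoc m s1 t1) in *.
  assert (Hx1 : vbound (S m) x 1) by (apply vbound_vsnoc; [eapply vbound_mono; eauto|]; lra).
  assert (Hy1 : vbound (S m) y 1) by (apply vbound_vsnoc; [eapply vbound_mono; eauto|]; lra).
  set (E := vsup m (fun k => Csub (Csub (s1 k) (s0 k)) (Cmul h (l k)))).
  assert (HE0 : 0 <= E) by apply vsup_nonneg.
  assert (E <= K * (e * e) + E / 4); [|assert (0 <= K * (e * e)) by nra; lra].
  apply vsup_le. nra. intros k Hk.
  destruct (HF k Hk) as (_ & _ & _ & _ & H4).
  specialize (H4 x y e He Hx1 Hy1 Hyx).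
  unfold y, x in H4. rewrite Csum_vsnoc_increment in H4. fold x y in H4.
  replace (Csub t1 t0) with h in H4 by (unfold t1; ring).
  assert (Hf1' : F k y = s1 k) by exact (Hf1 k Hk).
  assert (Hf0' : F k x = s0 k) by exact (Hf0 k Hk).
  rewrite Hf1', Hf0' in H4.
  set (A := Csum m (fun j => Cmul (Csub (s1 j) (s0 j)) (DF k j x))) in *.
  set (L := Csum m (fun j => Cmul (l j) (DF k j x))).
  assert (HB : Csum m (fun j => Cmul (Csub (Csub (s1 j) (s0 j)) (Cmul h (l j))) (DF k j x)) = Csub A (Cmul h L)).
  { unfold A, L. rewrite <- Csum_scal, <- Csum_sub. apply Csum_ext; intros; ring. }
  assert (HBn : Cnorm (Csub A (Cmul h L)) <= INR m * (E * (K * sg))).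
  { rewrite <- HB. apply linear_part_small; auto. apply vbound_vsnoc; auto. lra. apply vbound_vsup. }
  rewrite (Hlf k Hk). fold L.
  replace (Csub (Csub (s1 k) (s0 k)) (Cmul h (Cadd (DF k m x) L))) with
    (Cadd (Csub (Csub (s1 k) (s0 k)) (Cadd A (Cmul h (DF k m x)))) (Csub A (Cmul h L))) by ring.
  eapply Rle_trans. apply Cnorm_triangle.
  assert (INR m * (E * (K * sg)) = E * (INR m * K * sg)) by ring.
  assert (E * (INR m * K * sg) <= E * (1/4)) by (apply Rmult_le_compat_l; lra). lra.
Qed.

Lemma implicit_solution_differentiable t0 : Cnorm t0 < ift_radius ->
  exists (l : nat -> C) (Cc : R), 0 <= Cc /\
    forall h, Cnorm h <= ift_radius - Cnorm t0 -> forall k, (k < m)%nat ->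
      Cnorm (Csub (Csub (Sf (Cadd t0 h) k) (Sf t0 k)) (Cmul h (l k))) <= Cc * (Cnorm h * Cnorm h).
Proof.
  intro Ht0. pose proof ift_radius_le. pose proof ift_radius_pos.
  destruct (HSf t0 ltac:(lra)) as [Hs0 _].
  assert (Hx : vbound (S m) (vsnoc m (Sf t0) t0) sg) by (apply vbound_vsnoc; auto; lra).
  destruct (implicit_derivative_exists _ Hx) as [l [_ Hlf]].
  exists l, (2 * K * ((3 * K + 1) * (3 * K + 1))). split. nra.
  intros h Hh k Hk.
  assert (Ht1 : Cnorm (Cadd t0 h) <= ift_radius) by (eapply Rle_trans; [apply Cnorm_triangle|]; lra).
  assert (Hh0 : 0 <= Cnorm h) by apply Cnorm_nonneg.
  pose proof (implicit_solution_lipschitz t0 (Cadd t0 h) ltac:(lra) Ht1) as HD.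
  replace (Csub (Cadd t0 h) t0) with h in HD by ring.
  set (e := (3 * K + 1) * Cnorm h).
  assert (Hyx : vbound (S m) (vsub (vsnoc m (Sf (Cadd t0 h)) (Cadd t0 h)) (vsnoc m (Sf t0) t0)) e).
  { rewrite vsub_vsnoc. apply vbound_vsnoc.
    - intros j Hj. eapply Rle_trans. apply (vbound_vsup m _ j Hj). unfold e. nra.
    - replace (Csub (Cadd t0 h) t0) with h by ring. unfold e. nra. }
  pose proof (implicit_linearization_error t0 h l e ltac:(lra) Ht1 Hlf ltac:(unfold e; nra) Hyx).
  eapply Rle_trans.
  apply (vbound_vsup m (fun k => Csub (Csub (Sf (Cadd t0 h) k) (Sf t0 k)) (Cmul h (l k))) k Hk).
  unfold e in *. nra.
Qed.
End IFT.

Definition vzero : nat -> C := fun _ => C0.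

Section C11_at_origin.
Variable r : nat.

(* [C11_at0 r g g0 dv]: [g] is [C11] on [C^(r+1)], with value [g0] and partial derivatives [dv j],
   [j < r], at the origin; the derivative in the last variable is not recorded. *)
Definition C11_at0 (g : (nat -> C) -> C) (g0 : C) (dv : nat -> C) : Prop :=
  exists Dg, C11 (S r) g Dg /\ g vzero = g0 /\ forall j, (j < r)%nat -> Dg j vzero = dv j.

Lemma C11_at0_conv g g0 dv g0' dv' : C11_at0 g g0 dv -> g0 = g0' -> (forall j, (j < r)%nat -> dv j = dv' j) -> C11_at0 g g0' dv'.
Proof. intros (Dg & H1 & H2 & H3) E1 E2. exists Dg. repeat split; auto. congruence. intros; rewrite H3, E2; auto. Qed.

Lemma C11_at0_const c : C11_at0 (fun _ => c) c (fun _ => C0).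
Proof. exists (fun _ _ => C0). repeat split; auto. apply C11_const. Qed.

Lemma C11_at0_var j0 : (j0 < S r)%nat -> C11_at0 (fun x => x j0) C0 (fun j => if Nat.eqb j j0 then C1 else C0).
Proof. intro H. exists (fun j _ => if Nat.eqb j j0 then C1 else C0). repeat split; auto. apply C11_var; auto. Qed.

Lemma C11_at0_add g g0 a h h0 b : C11_at0 g g0 a -> C11_at0 h h0 b ->
  C11_at0 (fun x => Cadd (g x) (h x)) (Cadd g0 h0) (fun j => Cadd (a j) (b j)).
Proof.
  intros (Dg & H1 & H2 & H3) (Dh & K1 & K2 & K3). eexists. split. apply C11_add; eauto.
  split. simpl; congruence. intros; simpl. rewrite H3, K3; auto.
Qed.

Lemma C11_at0_sub g g0 a h h0 b : C11_at0 g g0 a -> C11_at0 h h0 b ->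
  C11_at0 (fun x => Csub (g x) (h x)) (Csub g0 h0) (fun j => Csub (a j) (b j)).
Proof.
  intros (Dg & H1 & H2 & H3) (Dh & K1 & K2 & K3). eexists. split. apply C11_sub; eauto.
  split. simpl; congruence. intros; simpl. rewrite H3, K3; auto.
Qed.

Lemma C11_at0_mul g g0 a h h0 b : C11_at0 g g0 a -> C11_at0 h h0 b ->
  C11_at0 (fun x => Cmul (g x) (h x)) (Cmul g0 h0) (fun j => Cadd (Cmul g0 (b j)) (Cmul h0 (a j))).
Proof.
  intros (Dg & H1 & H2 & H3) (Dh & K1 & K2 & K3). eexists. split. apply C11_mul; eauto.
  split. simpl; congruence. intros; simpl. rewrite H3, K3, H2, K2; auto.
Qed.

Lemma C11_at0_pow_at1 g a p : C11_at0 g C1 a -> C11_at0 (fun x => Cpow (g x) p) C1 (fun j => Cmul (RtoC (INR p)) (a j)).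
Proof.
  intro H. induction p.
  - eapply C11_at0_conv. apply (C11_at0_const C1). reflexivity. intros; unfold RtoC, Cmul, C0; simpl. apply Cpair_eq; ring.
  - eapply C11_at0_conv. apply (C11_at0_mul _ _ _ _ _ _ H IHp). ring.
    intros. rewrite S_INR. unfold RtoC, Cmul, Cadd, C1; simpl. apply Cpair_eq; ring.
Qed.

Lemma C11_at0_pow_flat g g0 p : C11_at0 g g0 (fun _ => C0) -> C11_at0 (fun x => Cpow (g x) p) (Cpow g0 p) (fun _ => C0).
Proof.
  intro H. induction p.
  - apply (C11_at0_const C1).
  - eapply C11_at0_conv. apply (C11_at0_mul _ _ _ _ _ _ H IHp). reflexivity. intros; simpl; ring.
Qed.

Lemma C11_at0_prod n f a : (forall i, (i < n)%nat -> C11_at0 (f i) C1 (a i)) ->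
  C11_at0 (fun x => Cprod n (fun i => f i x)) C1 (fun j => Csum n (fun i => a i j)).
Proof.
  induction n; intro H.
  - eapply C11_at0_conv. apply (C11_at0_const C1). reflexivity. reflexivity.
  - eapply C11_at0_conv. apply (C11_at0_mul _ _ _ _ _ _ (IHn (fun i Hi => H i (Nat.lt_lt_succ_r _ _ Hi))) (H n (Nat.lt_succ_diag_r n))).
    ring. intros; simpl; ring.
Qed.

Lemma C11_at0_sum n f g0 a : (forall i, (i < n)%nat -> C11_at0 (f i) (g0 i) (a i)) ->
  C11_at0 (fun x => Csum n (fun i => f i x)) (Csum n g0) (fun j => Csum n (fun i => a i j)).
Proof.
  induction n; intro H.
  - eapply C11_at0_conv. apply (C11_at0_const C0). reflexivity. reflexivity.
  - eapply C11_at0_conv. apply (C11_at0_add _ _ _ _ _ _ (IHn (fun i Hi => H i (Nat.lt_lt_succ_r _ _ Hi))) (H n (Nat.lt_succ_diag_r n))).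
    reflexivity. reflexivity.
Qed.

End C11_at_origin.

Section Parametrization.
Variables (n r : nat) (M : nat -> nat -> Z) (d : nat -> nat) (Psi : nat -> nat -> R).
Hypothesis Hd : forall i, (i < n)%nat -> (0 < d i)%nat.
Hypothesis Hdeg : forall k, (k < r)%nat -> Zsum n (fun j => (M k j * Z.of_nat (d j))%Z) = 0%Z.
Hypothesis HPsi : forall k k', (k < r)%nat -> (k' < r)%nat ->
    Rsum n (fun i => IZR (M k i) * Psi i k') = (if Nat.eqb k k' then 1 else 0).

(* The ansatz [z_i = t^(d_i) u0_i (1 + w_i)] with [w = Psi x] and [u0_i = exp(i pi phase_i)], [A phase = c].
   The unknowns are [x_0, ..., x_(r-1)], and [t = x_r]. In the [k]-th gluing monomial the factors
   [t^(A_k . d) = 1] and [u0^(A_k) = (-1)^(c_k)] split off, leaving the equation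
   [num_monomial k = den_monomial k] (exponents split into positive and negative parts). As [A Psi = 1],
   [Fsys k = x_k - (num_monomial k - den_monomial k)] has no linear term in [x]. *)
Definition Apos k i := Z.to_nat (M k i).
Definition Aneg k i := Z.to_nat (- M k i).
Definition Bpos k i := Z.to_nat (M k (n + i)%nat).
Definition Bneg k i := Z.to_nat (- M k (n + i)%nat).
Definition phase i := Rsum r (fun k => Psi i k * IZR (M k (2 * n)%nat)).
Definition u0 i := cis (phase i * PI).
Definition wcorr i (x : nat -> C) := Csum r (fun j => Cmul (RtoC (Psi i j)) (x j)).
Definition zcoord i (x : nat -> C) := Cmul (Cpow (x r) (d i)) (Cmul (u0 i) (Cadd C1 (wcorr i x))).
Definition num_monomial k (x : nat -> C) := Cprod n (fun i => Cmul (Cpow (Cadd C1 (wcorr i x)) (Apos k i)) (Cpow (Csub C1 (zcoord i x)) (Bpos k i))).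
Definition den_monomial k (x : nat -> C) := Cprod n (fun i => Cmul (Cpow (Cadd C1 (wcorr i x)) (Aneg k i)) (Cpow (Csub C1 (zcoord i x)) (Bneg k i))).
Definition Fsys k (x : nat -> C) := Csub (x k) (Csub (num_monomial k x) (den_monomial k x)).

Lemma C11_at0_wcorr i : C11_at0 r (wcorr i) C0 (fun j => RtoC (Psi i j)).
Proof.
  eapply C11_at0_conv.
  apply (C11_at0_sum r r (fun j x => Cmul (RtoC (Psi i j)) (x j)) (fun _ => C0)
     (fun j' j0 => Cadd (Cmul (RtoC (Psi i j')) (if Nat.eqb j0 j' then C1 else C0)) (Cmul C0 C0))).
  - intros j Hj. eapply C11_at0_conv. apply (C11_at0_mul r _ _ _ _ _ _ (C11_at0_const r (RtoC (Psi i j))) (C11_at0_var r j ltac:(lia))).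
    ring. reflexivity.
  - apply Csum_zero.
  - intros j Hj. simpl.
    rewrite (Csum_ext _ _ (fun j' => Cmul (RtoC (Psi i j')) (if Nat.eqb j' j then C1 else C0))).
    + apply Csum_delta; auto.
    + intros j' Hj'. rewrite Nat.eqb_sym. ring.
Qed.

Lemma C11_at0_1_wcorr i : C11_at0 r (fun x => Cadd C1 (wcorr i x)) C1 (fun j => RtoC (Psi i j)).
Proof. eapply C11_at0_conv. apply (C11_at0_add r _ _ _ _ _ _ (C11_at0_const r C1) (C11_at0_wcorr i)). ring. intros; cbv beta; ring. Qed.

Lemma C11_at0_zcoord i : (i < n)%nat -> C11_at0 r (zcoord i) C0 (fun _ => C0).
Proof.
  intro Hi. unfold zcoord.
  assert (Ht : C11_at0 r (fun x => Cpow (x r) (d i)) C0 (fun _ => C0)).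
  { eapply C11_at0_conv. apply C11_at0_pow_flat. eapply C11_at0_conv. apply (C11_at0_var r r ltac:(lia)). reflexivity.
    intros j Hj. cbv beta. destruct (Nat.eqb_spec j r); [lia|reflexivity].
    apply Cpow_C0; auto. reflexivity. }
  eapply C11_at0_conv. apply (C11_at0_mul r _ _ _ _ _ _ Ht (C11_at0_mul r _ _ _ _ _ _ (C11_at0_const r (u0 i)) (C11_at0_1_wcorr i))).
  ring. intros; cbv beta; ring.
Qed.

Lemma C11_at0_factor i (p q : nat) : (i < n)%nat ->
  C11_at0 r (fun x => Cmul (Cpow (Cadd C1 (wcorr i x)) p) (Cpow (Csub C1 (zcoord i x)) q)) C1 (fun j => RtoC (INR p * Psi i j)).
Proof.
  intro Hi.
  assert (H1 : C11_at0 r (fun x => Csub C1 (zcoord i x)) C1 (fun _ => C0)).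
  { eapply C11_at0_conv. apply (C11_at0_sub r _ _ _ _ _ _ (C11_at0_const r C1) (C11_at0_zcoord i Hi)). ring. intros; cbv beta; ring. }
  eapply C11_at0_conv. apply (C11_at0_mul r _ _ _ _ _ _ (C11_at0_pow_at1 r _ _ p (C11_at0_1_wcorr i)) (C11_at0_pow_at1 r _ _ q H1)).
  ring. intros. rewrite <- RtoC_mul. ring.
Qed.

Lemma C11_at0_Fsys k : (k < r)%nat -> C11_at0 r (Fsys k) C0 (fun _ => C0).
Proof.
  intro Hk. unfold Fsys.
  assert (HP : C11_at0 r (num_monomial k) C1 (fun j => Csum n (fun i => RtoC (INR (Apos k i) * Psi i j)))).
  { apply C11_at0_prod. intros i Hi. apply C11_at0_factor; auto. }
  assert (HN : C11_at0 r (den_monomial k) C1 (fun j => Csum n (fun i => RtoC (INR (Aneg k i) * Psi i j)))).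
  { apply C11_at0_prod. intros i Hi. apply C11_at0_factor; auto. }
  eapply C11_at0_conv. apply (C11_at0_sub r _ _ _ _ _ _ (C11_at0_var r k ltac:(lia)) (C11_at0_sub r _ _ _ _ _ _ HP HN)).
  - ring.
  - intros j Hj. cbv beta. rewrite !Csum_RtoC, RtoC_sub.
    replace (Rsum n (fun i => INR (Apos k i) * Psi i j) - Rsum n (fun i => INR (Aneg k i) * Psi i j))
      with (Rsum n (fun i => IZR (M k i) * Psi i j)).
    + rewrite HPsi by auto. rewrite (Nat.eqb_sym j k). destruct (Nat.eqb k j); unfold RtoC, C1, C0, Csub, Cadd, Copp; simpl; apply Cpair_eq; ring.
    + rewrite <- Rsum_sub. apply Rsum_ext. intros i Hi. rewrite <- INR_pos_sub_neg. unfold Apos, Aneg. ring.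
Qed.

Lemma phase_row k : (k < r)%nat -> Rsum n (fun i => IZR (M k i) * phase i) = IZR (M k (2 * n)%nat).
Proof.
  intro Hk. unfold phase.
  rewrite (Rsum_ext _ _ (fun i => Rsum r (fun k' => IZR (M k i) * Psi i k' * IZR (M k' (2 * n)%nat)))).
  2:{ intros i Hi. rewrite <- Rsum_scal. apply Rsum_ext; intros; ring. }
  rewrite Rsum_exchange.
  rewrite (Rsum_ext _ _ (fun k' => IZR (M k' (2 * n)%nat) * (if Nat.eqb k' k then 1 else 0))).
  - apply Rsum_delta; auto.
  - intros k' Hk'. rewrite Nat.eqb_sym, <- (HPsi k k' Hk Hk'), <- Rsum_scal. apply Rsum_ext; intros; ring.
Qed.

Lemma u0_row k : (k < r)%nat ->
  Cmul (Cprod n (fun i => Cpow (u0 i) (Apos k i))) (Cinv (Cprod n (fun i => Cpow (u0 i) (Aneg k i))))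
  = sgnZ (M k (2 * n)%nat).
Proof.
  intro Hk. unfold u0.
  rewrite (Cprod_ext n (fun i => Cpow (cis (phase i * PI)) (Apos k i))
    (fun i => cis (INR (Apos k i) * (phase i * PI)))) by (intros; apply Cpow_cis).
  rewrite (Cprod_ext n (fun i => Cpow (cis (phase i * PI)) (Aneg k i))
    (fun i => cis (INR (Aneg k i) * (phase i * PI)))) by (intros; apply Cpow_cis).
  rewrite !Cprod_cis, Cinv_cis, cis_add, sgnZ_cis. f_equal.
  rewrite <- (phase_row k Hk), (Rmult_comm _ PI), <- Rsum_scal.
  replace (Rsum n (fun i => INR (Apos k i) * (phase i * PI)) + - Rsum n (fun i => INR (Aneg k i) * (phase i * PI)))
    with (Rsum n (fun i => INR (Apos k i) * (phase i * PI)) - Rsum n (fun i => INR (Aneg k i) * (phase i * PI))) by ring.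
  rewrite <- Rsum_sub. apply Rsum_ext. intros i Hi. rewrite <- INR_pos_sub_neg. unfold Apos, Aneg. ring.
Qed.

Lemma zcoord_monomial s t (p q : nat -> nat) :
  Cprod n (fun i => Cmul (Cpow (zcoord i (vsnoc r s t)) (p i)) (Cpow (Csub C1 (zcoord i (vsnoc r s t))) (q i))) =
  Cmul (Cmul (Cpow t (natsum n (fun i => d i * p i)%nat)) (Cprod n (fun i => Cpow (u0 i) (p i))))
    (Cprod n (fun i => Cmul (Cpow (Cadd C1 (wcorr i (vsnoc r s t))) (p i))
                            (Cpow (Csub C1 (zcoord i (vsnoc r s t))) (q i)))).
Proof.
  rewrite <- Cprod_pow, <- !Cprod_mul. apply Cprod_ext. intros i Hi.
  unfold zcoord at 1. rewrite vsnoc_last, !Cpow_mul_base.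
  replace (Cpow t (d i * p i)) with (Cpow (Cpow t (d i)) (p i)); [ring|].
  clear. generalize (p i) as m. induction m. rewrite Nat.mul_0_r. reflexivity.
  replace (d i * S m)%nat with (d i + d i * m)%nat by lia. rewrite Cpow_add, <- IHm. reflexivity.
Qed.

(* Since [A d = 0], the powers of [t] cancel between the two sides, and [A . phase = c] produces the sign. *)
Lemma gluing_row_of_balanced k s t : (k < r)%nat -> t <> C0 ->
  (forall i, (i < n)%nat -> Cadd C1 (wcorr i (vsnoc r s t)) <> C0 /\ Csub C1 (zcoord i (vsnoc r s t)) <> C0) ->
  num_monomial k (vsnoc r s t) = den_monomial k (vsnoc r s t) ->
  gluing_monomial n (M k) (fun i => zcoord i (vsnoc r s t)) = sgnZ (M k (2 * n)%nat).
Proof.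
  intros Hk Ht Hnz HPN. set (x := vsnoc r s t) in *.
  assert (Hz0 : forall i, (i < n)%nat -> zcoord i x <> C0).
  { intros i Hi. unfold zcoord. unfold x. rewrite vsnoc_last. fold x.
    apply Cmul_neq0. apply Cpow_neq0; auto. apply Cmul_neq0. apply cis_neq0. apply Hnz; auto. }
  set (E := fun (p q : nat -> nat) i => Cmul (Cpow (zcoord i x) (p i)) (Cpow (Csub C1 (zcoord i x)) (q i))).
  assert (HE : forall (p q : nat -> nat) i, (i < n)%nat -> E p q i <> C0).
  { intros p q i Hi. apply Cmul_neq0; apply Cpow_neq0; auto. apply Hnz; auto. }
  unfold gluing_monomial.
  rewrite (Cprod_ext n _ (fun i => Cmul (E (Apos k) (Bpos k) i) (Cinv (E (Aneg k) (Bneg k) i)))).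
  2:{ intros i Hi. unfold E. rewrite !Cpowz_split. unfold Apos, Aneg, Bpos, Bneg.
      pose proof (Cpow_neq0 _ (Z.to_nat (- M k i)) (Hz0 i Hi)).
      pose proof (Cpow_neq0 _ (Z.to_nat (- M k (n + i)%nat)) (proj2 (Hnz i Hi))).
      field. split; auto. }
  rewrite Cprod_mul, Cprod_inv by auto. unfold E, x. rewrite !zcoord_monomial. fold x.
  fold (num_monomial k x). fold (den_monomial k x). rewrite HPN.
  replace (natsum n (fun i => (d i * Apos k i)%nat)) with (natsum n (fun i => (d i * Aneg k i)%nat)).
  2:{ pose proof (natsum_pos_sub_neg n (M k) d). rewrite Hdeg in H by auto. unfold Apos, Aneg. lia. }
  assert (HNk : den_monomial k x <> C0).
  { rewrite <- HPN. unfold num_monomial. apply Cprod_neq0. intros i Hi.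
    apply Cmul_neq0; apply Cpow_neq0; apply Hnz; auto. }
  assert (HU : Cprod n (fun i => Cpow (u0 i) (Aneg k i)) <> C0).
  { apply Cprod_neq0. intros i Hi. apply Cpow_neq0. apply cis_neq0. }
  pose proof (Cpow_neq0 t (natsum n (fun i => (d i * Aneg k i)%nat)) Ht).
  rewrite <- (u0_row k Hk). field. repeat split; auto.
Qed.
End Parametrization.

Lemma wcorr_bound r Psi i x e : 0 <= e -> vbound r x e -> Cnorm (wcorr r Psi i x) <= Rsum r (fun j => Rabs (Psi i j)) * e.
Proof.
  intros He Hx. unfold wcorr. eapply Rle_trans. apply Csum_norm.
  rewrite Rmult_comm, <- Rsum_scal. apply Rsum_le. intros j Hj. rewrite Cnorm_mul, Cnorm_RtoC.
  pose proof (Hx j Hj); pose proof (Rabs_pos (Psi i j)); nra.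
Qed.

Section Disc_map.
Variables (n r : nat) (M : nat -> nat -> Z) (d : nat -> nat) (Psi : nat -> nat -> R).
Variables (K sg : R) (Sf : C -> nat -> C).
Hypothesis Hn : (0 < n)%nat.
Hypothesis Hd : forall i, (i < n)%nat -> (0 < d i)%nat.
Hypothesis Hdeg : forall k, (k < r)%nat -> Zsum n (fun j => (M k j * Z.of_nat (d j))%Z) = 0%Z.
Hypothesis HPsi : forall k k', (k < r)%nat -> (k' < r)%nat ->
    Rsum n (fun i => IZR (M k i) * Psi i k') = (if Nat.eqb k k' then 1 else 0).
Hypothesis HK1 : 1 <= K.
Hypothesis Hsg0 : 0 < sg.
Hypothesis Hsg1 : sg <= 1 / 2.
Hypothesis HPB : forall i, (i < n)%nat -> Rsum r (fun j => Rabs (Psi i j)) * sg <= 1 / 12.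
Hypothesis HSf : forall t, Cnorm t <= ift_radius K sg ->
  vbound r (Sf t) sg /\ forall k, (k < r)%nat -> Fsys n r M d Psi k (vsnoc r (Sf t) t) = Sf t k.

Let rad := ift_radius K sg.
Lemma rad_pos : 0 < rad.
Proof. unfold rad, ift_radius. apply Rdiv_lt_0_compat; lra. Qed.
Lemma rad_le : rad <= sg / 8.
Proof. unfold rad, ift_radius. apply Rmult_le_compat_l. lra. apply Rinv_le_contravar; lra. Qed.

Let sol t := vsnoc r (Sf t) t.

Lemma vbound_sol t : Cnorm t <= rad -> vbound r (sol t) sg.
Proof. intros Ht j Hj. unfold sol, vsnoc. destruct (Nat.ltb_spec j r); [|lia]. apply (proj1 (HSf t Ht)); auto. Qed.

Lemma wcorr_small t i : Cnorm t <= rad -> (i < n)%nat -> Cnorm (wcorr r Psi i (sol t)) <= 1 / 12.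
Proof. intros Ht Hi. eapply Rle_trans. apply (wcorr_bound r Psi i (sol t) sg). lra. apply vbound_sol; auto. apply HPB; auto. Qed.

Lemma zcoord_small t i : Cnorm t <= rad -> (i < n)%nat -> Cnorm (zcoord n r M d Psi i (sol t)) <= 2 * Cnorm t.
Proof.
  intros Ht Hi. pose proof rad_pos. pose proof rad_le. unfold zcoord.
  replace (sol t r) with t by (unfold sol; symmetry; apply vsnoc_last).
  rewrite !Cnorm_mul. unfold u0. rewrite Cnorm_cis.
  assert (A : Cnorm (Cpow t (d i)) <= Cnorm t) by (apply Cnorm_pow_le; auto; lra).
  assert (B : Cnorm (Cadd C1 (wcorr r Psi i (sol t))) <= 2).
  { eapply Rle_trans. apply Cnorm_triangle. rewrite Cnorm_C1. pose proof (wcorr_small t i Ht Hi). lra. }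
  pose proof (Cnorm_nonneg (Cpow t (d i))). pose proof (Cnorm_nonneg (Cadd C1 (wcorr r Psi i (sol t)))).
  pose proof (Cnorm_nonneg t). nra.
Qed.

Lemma zcoord_lt1 t i : Cnorm t <= rad -> (i < n)%nat -> Cnorm (zcoord n r M d Psi i (sol t)) < 1.
Proof. intros Ht Hi. pose proof (zcoord_small t i Ht Hi). pose proof rad_le. lra. Qed.

Lemma num_eq_den t k : Cnorm t <= rad -> (k < r)%nat -> num_monomial n r M d Psi k (sol t) = den_monomial n r M d Psi k (sol t).
Proof.
  intros Ht Hk. pose proof (proj2 (HSf t Ht) k Hk) as E. unfold Fsys in E. fold (sol t) in E.
  assert (Xk : sol t k = Sf t k) by (unfold sol, vsnoc; destruct (Nat.ltb_spec k r); [auto|lia]).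
  rewrite Xk in E. transitivity (Cadd (Csub (num_monomial n r M d Psi k (sol t)) (den_monomial n r M d Psi k (sol t))) (den_monomial n r M d Psi k (sol t))).
  ring. replace (Csub (num_monomial n r M d Psi k (sol t)) (den_monomial n r M d Psi k (sol t))) with C0. ring.
  transitivity (Csub (Sf t k) (Csub (Sf t k) (Csub (num_monomial n r M d Psi k (sol t)) (den_monomial n r M d Psi k (sol t))))). rewrite E. ring. ring.
Qed.

Lemma in_V_sol t : Cnorm t <= rad -> t <> C0 -> in_V n r M (fun i => zcoord n r M d Psi i (sol t)).
Proof.
  intros Ht Ht0.
  assert (Hw : forall i, (i < n)%nat -> Cadd C1 (wcorr r Psi i (sol t)) <> C0).
  { intros i Hi. apply Cadd1_neq0. pose proof (wcorr_small t i Ht Hi). lra. }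
  assert (Hz : forall i, (i < n)%nat -> zcoord n r M d Psi i (sol t) <> C0).
  { intros i Hi. unfold zcoord. replace (sol t r) with t by (unfold sol; symmetry; apply vsnoc_last).
    apply Cmul_neq0. apply Cpow_neq0; auto. apply Cmul_neq0. apply cis_neq0. auto. }
  split.
  - intros i Hi. split; auto. apply neq_C1. apply zcoord_lt1; auto.
  - apply gluing_monomial_lattice.
    + intros i Hi. split; auto. apply Csub1_neq0. apply zcoord_lt1; auto.
    + intros k Hk. apply gluing_row_of_balanced; auto.
      * intros i Hi. split. apply Hw; auto. apply Csub1_neq0. apply zcoord_lt1; auto.
      * apply num_eq_den; auto.
Qed.

Hypothesis HSf_diff : forall t0, Cnorm t0 < rad -> exists (l : nat -> C) (Cc : R), 0 <= Cc /\
  forall h, Cnorm h <= rad - Cnorm t0 -> forall k, (k < r)%nat ->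
    Cnorm (Csub (Csub (Sf (Cadd t0 h) k) (Sf t0 k)) (Cmul h (l k))) <= Cc * (Cnorm h * Cnorm h).

(* The holomorphic disc is [tau |-> z(rad tau)]; [gain i] collects the factor [rad^(d_i) u0_i]. *)
Let gain i := Cmul (Cpow (RtoC rad) (d i)) (u0 n r M Psi i).
Let ufun i tau := Cmul (gain i) (Cadd C1 (wcorr r Psi i (sol (Cmul (RtoC rad) tau)))).

Lemma Cnorm_scale_rad tau : Cnorm (Cmul (RtoC rad) tau) = rad * Cnorm tau.
Proof. rewrite Cnorm_mul, Cnorm_RtoC, Rabs_right. reflexivity. pose proof rad_pos; lra. Qed.

Lemma zcoord_scaled tau i : Cmul (Cpow tau (d i)) (ufun i tau) = zcoord n r M d Psi i (sol (Cmul (RtoC rad) tau)).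
Proof.
  unfold ufun, gain, zcoord. replace (sol (Cmul (RtoC rad) tau) r) with (Cmul (RtoC rad) tau) by (unfold sol; symmetry; apply vsnoc_last).
  rewrite Cpow_mul_base. ring.
Qed.

Lemma gain_le1 i : Cnorm (gain i) <= 1.
Proof.
  unfold gain, u0. rewrite Cnorm_mul, Cnorm_cis, Cnorm_pow, Cnorm_RtoC, Rabs_right.
  rewrite Rmult_1_r. rewrite <- (pow1 (d i)). apply pow_incr. pose proof rad_pos; pose proof rad_le. lra.
  pose proof rad_pos; lra.
Qed.

Lemma gain_neq0 i : gain i <> C0.
Proof. unfold gain. apply Cmul_neq0. apply Cpow_neq0. intro E. injection E; intros. pose proof rad_pos. lra. apply cis_neq0. Qed.

Lemma wcorr_sol_expansion i t0 h l Cc :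
  (forall k, (k < r)%nat ->
     Cnorm (Csub (Csub (Sf (Cadd t0 h) k) (Sf t0 k)) (Cmul h (l k))) <= Cc * (Cnorm h * Cnorm h)) ->
  Cnorm (Csub (Csub (wcorr r Psi i (sol (Cadd t0 h))) (wcorr r Psi i (sol t0)))
              (Cmul h (Csum r (fun j => Cmul (RtoC (Psi i j)) (l j)))))
    <= Rsum r (fun j => Rabs (Psi i j)) * (Cc * (Cnorm h * Cnorm h)).
Proof.
  intro Hl.
  replace (Csub (Csub (wcorr r Psi i (sol (Cadd t0 h))) (wcorr r Psi i (sol t0)))
                (Cmul h (Csum r (fun j => Cmul (RtoC (Psi i j)) (l j)))))
    with (Csum r (fun j => Cmul (RtoC (Psi i j)) (Csub (Csub (Sf (Cadd t0 h) j) (Sf t0 j)) (Cmul h (l j))))).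
  2:{ unfold wcorr. rewrite <- Csum_scal, <- !Csum_sub. apply Csum_ext. intros j Hj.
      unfold sol, vsnoc. destruct (Nat.ltb_spec j r); [|lia]. ring. }
  eapply Rle_trans. apply Csum_norm. rewrite Rmult_comm, <- Rsum_scal. apply Rsum_le.
  intros j Hj. rewrite Cnorm_mul, Cnorm_RtoC, Rmult_comm.
  apply Rmult_le_compat_r. apply Rabs_pos. apply Hl; auto.
Qed.

Lemma ufun_holomorphic i : holomorphic_on_disc (ufun i).
Proof.
  intros tau Htau. unfold in_disc in Htau. pose proof rad_pos as Hrp. pose proof rad_le as Hrl.
  set (t0 := Cmul (RtoC rad) tau).
  assert (Ht0 : Cnorm t0 < rad).
  { unfold t0. rewrite Cnorm_scale_rad. pose proof (Cnorm_nonneg tau). nra. }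
  destruct (HSf_diff t0 Ht0) as [l [Cc [HCc Hl]]].
  set (SL := Csum r (fun j => Cmul (RtoC (Psi i j)) (l j))).
  exists (Cmul (gain i) (Cmul (RtoC rad) SL)). intros eps Heps.
  set (PBi := Rsum r (fun j => Rabs (Psi i j))).
  assert (HPBi : 0 <= PBi) by (apply Rsum_nonneg; intros; apply Rabs_pos).
  set (Q := PBi * Cc * rad * rad + 1).
  assert (HQ0 : 0 <= PBi * Cc * rad * rad) by (apply Rmult_le_pos; [apply Rmult_le_pos; [apply Rmult_le_pos|]|]; lra).
  assert (HQ : 1 <= Q) by (unfold Q; lra).
  exists (Rmin ((rad - Cnorm t0) / rad) (eps / Q)). split.
  { apply Rmin_glb_lt; apply Rdiv_lt_0_compat; lra. }
  intros h [Hh0 Hhd].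
  assert (Hh : h <> C0) by (intro E; rewrite E, Cnorm_C0 in Hh0; lra).
  assert (Hhd1 : Cnorm h < (rad - Cnorm t0) / rad) by (eapply Rlt_le_trans; [apply Hhd|apply Rmin_l]).
  assert (Hhd2 : Cnorm h < eps / Q) by (eapply Rlt_le_trans; [apply Hhd|apply Rmin_r]).
  set (h' := Cmul (RtoC rad) h).
  assert (Hh'n : Cnorm h' = rad * Cnorm h) by apply Cnorm_scale_rad.
  assert (Hh' : Cnorm h' <= rad - Cnorm t0).
  { rewrite Hh'n. apply (Rmult_lt_compat_l rad) in Hhd1; auto.
    replace (rad * ((rad - Cnorm t0) / rad)) with (rad - Cnorm t0) in Hhd1 by (field; lra). lra. }
  pose proof (wcorr_sol_expansion i t0 h' l Cc (Hl h' Hh')) as HW. fold SL PBi in HW. rewrite Hh'n in HW.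
  set (W := Csub (Csub (wcorr r Psi i (sol (Cadd t0 h'))) (wcorr r Psi i (sol t0))) (Cmul h' SL)) in HW.
  unfold ufun. replace (Cmul (RtoC rad) (Cadd tau h)) with (Cadd t0 h') by (unfold t0, h'; ring). fold t0.
  replace (Csub _ (Cmul (gain i) (Cmul (RtoC rad) SL))) with (Cmul (Cmul (gain i) (Cinv h)) W)
    by (unfold W, h'; field; auto).
  rewrite !Cnorm_mul, Cnorm_inv by auto.
  pose proof (gain_le1 i). pose proof (Cnorm_nonneg (gain i)). pose proof (Cnorm_nonneg W).
  assert (HI : / Cnorm h * Cnorm W <= PBi * Cc * rad * rad * Cnorm h).
  { apply (Rmult_le_reg_l (Cnorm h)); auto. rewrite <- Rmult_assoc, Rinv_r by lra. nra. }
  assert (0 <= / Cnorm h * Cnorm W) by (apply Rmult_le_pos; [left; apply Rinv_0_lt_compat|]; lra).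
  assert (Cnorm h * Q < eps).
  { apply (Rmult_lt_compat_r Q) in Hhd2; [|unfold Q; lra].
    unfold Rdiv in Hhd2. rewrite Rmult_assoc, Rinv_l, Rmult_1_r in Hhd2 by (unfold Q; lra). lra. }
  assert (Cnorm (gain i) * / Cnorm h * Cnorm W <= / Cnorm h * Cnorm W).
  { rewrite Rmult_assoc. rewrite <- (Rmult_1_l (/ Cnorm h * Cnorm W)) at 2. apply Rmult_le_compat_r; lra. }
  unfold Q in *. nra.
Qed.

Lemma ideal_point_origin : ideal_point n r M (fun i => Cmul (Cpow C0 (d i)) (ufun i C0)).
Proof.
  pose proof rad_pos. pose proof rad_le.
  assert (Hp : forall i, (i < n)%nat -> Cmul (Cpow C0 (d i)) (ufun i C0) = C0).
  { intros i Hi. rewrite Cpow_C0 by auto. ring. }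
  split; [split|].
  - intros i Hi. rewrite Hp by auto. intro E. apply C1_neq_C0. auto.
  - intros eps Heps. set (a := Rmin (1/2) (eps/4)). set (tau := RtoC a).
    assert (Ha : 0 < a) by (apply Rmin_glb_lt; lra).
    assert (Ha1 : a <= 1/2) by apply Rmin_l. assert (Ha2 : a <= eps/4) by apply Rmin_r.
    assert (Htn : Cnorm tau = a) by (unfold tau; rewrite Cnorm_RtoC, Rabs_right; lra).
    assert (Hts : Cnorm (Cmul (RtoC rad) tau) <= rad) by (rewrite Cnorm_scale_rad, Htn; nra).
    exists (fun i => zcoord n r M d Psi i (sol (Cmul (RtoC rad) tau))). split.
    + apply in_V_sol; auto. apply Cmul_neq0; intro E; injection E; intros; unfold tau in *; lra.
    + intros i Hi. rewrite Hp by auto. replace (Csub _ C0) with (zcoord n r M d Psi i (sol (Cmul (RtoC rad) tau))) by ring.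
      eapply Rle_lt_trans. apply zcoord_small; auto.
      rewrite Cnorm_scale_rad, Htn. nra.
  - intros [HV _]. destruct (HV 0%nat Hn) as [Hz0 _]. apply Hz0. apply Hp; auto.
Qed.

Lemma genuine_of_solution : genuine n r M d.
Proof.
  pose proof rad_pos. pose proof rad_le.
  assert (HVt : forall tau, in_disc tau -> tau <> C0 -> in_V n r M (fun i => Cmul (Cpow tau (d i)) (ufun i tau))).
  { intros tau Ht Ht0. unfold in_disc in Ht.
    replace (fun i => Cmul (Cpow tau (d i)) (ufun i tau)) with (fun i => zcoord n r M d Psi i (sol (Cmul (RtoC rad) tau)))
      by (apply functional_extensionality; intro i; rewrite zcoord_scaled; reflexivity).
    apply in_V_sol. rewrite Cnorm_scale_rad. pose proof (Cnorm_nonneg tau). nra.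
    apply Cmul_neq0; auto. intro E; injection E; intros; lra. }
  exists (fun i => Cmul (Cpow C0 (d i)) (ufun i C0)), ufun. split; [exact ideal_point_origin|split].
  - intros i Hi. split; [apply ufun_holomorphic|split].
    + unfold ufun. apply Cmul_neq0. apply gain_neq0. apply Cadd1_neq0.
      assert (Cnorm (Cmul (RtoC rad) C0) <= rad) by (rewrite Cnorm_scale_rad, Cnorm_C0; lra).
      pose proof (wcorr_small _ i H1 Hi). lra.
    + intro E. specialize (Hd i Hi). lia.
  - cbv zeta. split; [|split].
    + reflexivity.
    + intros t Ht. destruct (classic (t = C0)) as [E|E].
      * subst t. exact (proj1 ideal_point_origin).
      * apply in_V_in_Vbar. apply HVt; auto.
    + intros t Ht Ht0. apply HVt; auto.
Qed.
End Disc_map.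

Lemma Fsys_C11_bound n r M d Psi :
  (forall i, (i < n)%nat -> (0 < d i)%nat) ->
  (forall k k', (k < r)%nat -> (k' < r)%nat ->
     Rsum n (fun i => IZR (M k i) * Psi i k') = (if Nat.eqb k k' then 1 else 0)) ->
  exists DF K, 1 <= K /\
    (forall k, (k < r)%nat -> C11_bound (S r) (Fsys n r M d Psi k) (DF k) K) /\
    (forall k, (k < r)%nat -> Fsys n r M d Psi k (fun _ => C0) = C0) /\
    (forall k j, (k < r)%nat -> (j < r)%nat -> DF k j (fun _ => C0) = C0).
Proof.
  intros Hpos HPsi.
  assert (HD : forall k, exists D, (k < r)%nat ->
    C11 (S r) (Fsys n r M d Psi k) D /\ Fsys n r M d Psi k vzero = C0 /\
    forall j, (j < r)%nat -> D j vzero = C0).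
  { intro k. destruct (lt_dec k r) as [Hk|Hk].
    - destruct (C11_at0_Fsys n r M d Psi Hpos HPsi k Hk) as (D & H1 & H2 & H3). exists D. auto.
    - exists (fun _ _ => C0). intro; lia. }
  destruct (functional_choice _ HD) as [DF HDF].
  destruct (C11_uniform_bound (S r) r _ DF (fun k Hk => proj1 (HDF k Hk))) as [K [HK1 HKF]].
  exists DF, K. split; [|split; [|split]]; auto.
  - intros k Hk. apply (HDF k Hk).
  - intros k j Hk Hj. apply (HDF k Hk); auto.
Qed.

Lemma radius_choice r n K (Psi : nat -> nat -> R) : 1 <= K ->
  exists sg, 0 < sg /\ sg <= 1 / 2 /\ (INR r + 3) * K * sg <= 1 / 4 /\
    forall i, (i < n)%nat -> Rsum r (fun j => Rabs (Psi i j)) * sg <= 1 / 12.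
Proof.
  intro HK1.
  set (PB := 1 + Rsum n (fun i => Rsum r (fun j => Rabs (Psi i j)))).
  assert (HrowPB : forall i, (i < n)%nat -> 0 <= Rsum r (fun j => Rabs (Psi i j)) <= PB).
  { intros i Hi. assert (Hrow : forall i, 0 <= Rsum r (fun j => Rabs (Psi i j)))
      by (intro; apply Rsum_nonneg; intros; apply Rabs_pos).
    pose proof (Rsum_term n _ i (fun j _ => Hrow j) Hi). pose proof (Hrow i). unfold PB. lra. }
  assert (HPB : 1 <= PB).
  { unfold PB. assert (0 <= Rsum n (fun i => Rsum r (fun j => Rabs (Psi i j)))); [|lra].
    apply Rsum_nonneg. intros. apply Rsum_nonneg. intros. apply Rabs_pos. }
  pose proof (pos_INR r).
  exists (1 / (4 * (INR r + 3) * K * PB)).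
  assert (Hden : 12 <= 4 * (INR r + 3) * K * PB).
  { assert (12 <= 4 * (INR r + 3)) by lra. assert (1 <= K * PB) by nra. nra. }
  repeat split.
  - apply Rdiv_lt_0_compat; lra.
  - unfold Rdiv. rewrite !Rmult_1_l. apply Rinv_le_contravar; lra.
  - replace ((INR r + 3) * K * (1 / (4 * (INR r + 3) * K * PB))) with (1 / (4 * PB)) by (field; lra).
    unfold Rdiv. rewrite !Rmult_1_l. apply Rinv_le_contravar; lra.
  - intros i Hi. destruct (HrowPB i Hi).
    assert (PB * (1 / (4 * (INR r + 3) * K * PB)) <= 1 / 12).
    { replace (PB * (1 / (4 * (INR r + 3) * K * PB))) with (1 / (4 * (INR r + 3) * K)) by (field; lra).
      unfold Rdiv. rewrite !Rmult_1_l. apply Rinv_le_contravar; nra. }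
    assert (0 < 1 / (4 * (INR r + 3) * K * PB)) by (apply Rdiv_lt_0_compat; lra).
    nra.
Qed.

Theorem mainTheorem6 (n r : nat) (M : nat -> nat -> Z) (d : nat -> nat) :
  (r <= n - 1)%nat ->
  rows_Z_indep r (2 * n + 1) M ->
  degeneration_vector n r M d ->
  (forall i, (i < n)%nat -> (0 < d i)%nat) ->
  mat_rank r n (blockA M) (n - 1) ->
  genuine n r M d.
Proof.
  intros Hr _ [[i0 [Hi0 _]] Hdeg] Hpos Hrank.
  destruct (blockA_right_inverse n r M Hr Hrank) as [Psi HPsi].
  destruct (Fsys_C11_bound n r M d Psi Hpos HPsi) as (DF & K & HK1 & HKF & HF0 & HDF0).
  destruct (radius_choice r n K Psi HK1) as (sg & Hsg0 & Hsg1 & Hsg2 & HPB).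
  destruct (implicit_solution_function r _ DF K HK1 HKF HF0 HDF0 sg Hsg0 Hsg1 Hsg2) as [Sf HSf].
  apply (genuine_of_solution n r M d Psi K sg Sf); auto; [lia|].
  exact (implicit_solution_differentiable r _ DF K HK1 HKF HDF0 sg Hsg0 Hsg1 Hsg2 Sf HSf).
Qed.
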